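(* Fix $\gamma \in (\tfrac{2}{3},2)$. Let $x \in S_1^+(\mathrm{VI}_0) \setminus \{P_1^+(\mathrm{VI}_0)\}$. If $x$ does not lie in $\mathscr{F}_{\mathrm{VI}_0}$, then $\varphi^\tau(x) \to Q_1$ as $\tau \to -\infty$.
   Context: Set $q^* := \tfrac{3\gamma-2}{2} \in (0,2)$. On $\mathbb{R}^5$ with coordinates $(\Sigma_+,\Sigma_-,N_+,N_-,\Omega)$ consider the system (with $' = d/d\tau$) $\Sigma_+' = -(2-q)\Sigma_+ - 2N_-^2$, $\Sigma_-' = -(2-q)\Sigma_- - 2\sqrt{3}N_+N_-$, $N_+' = (q+2\Sigma_+)N_+ + 2\sqrt{3}\Sigma_- N_-$, $N_-' = (q+2\Sigma_+)N_- + 2\sqrt{3}\Sigma_- N_+$, $\Omega' = 2(q-q^* )\Omega$, where $q := 2(\Sigma_+^2+\Sigma_-^2) + q^*\Omega$. The phase space $B_1^+(\mathrm{VI}_0)$ is the set of points satisfying $\Omega + \Sigma_+^2 + \Sigma_-^2 + N_-^2 = 1$, $\Omega \ge 0$ and $N_- > |N_+|$; it is invariant, solutions exist for all $\tau$, and $\varphi^\tau(x)$ denotes the flow. The shear invariant set is $S_1^+(\mathrm{VI}_0) := B_1^+(\mathrm{VI}_0) \cap \{\Sigma_- = 0,\ N_+ = 0\}$. $P_1^+(\mathrm{VI}_0)$ is the equilibrium $(\Sigma_+,\Sigma_-,N_+,N_-,\Omega) = \big(-\tfrac{q^*}{2}, 0, 0, \tfrac12\sqrt{q^*(2-q^* )},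 1-\tfrac{q^*}{2}\big)$. $F$ is the equilibrium $(0,0,0,0,1)$, and $\mathscr{F}_{\mathrm{VI}_0}$ is the set of $x \in B_1^+(\mathrm{VI}_0)$ with $\varphi^\tau(x) \to F$ as $\tau \to -\infty$. $Q_1$ is the point $(1,0,0,0,0)$ (on the Kasner circle $\{\Sigma_+^2+\Sigma_-^2=1, N_\pm = 0, \Omega = 0\}$). *)

From Stdlib Require Import Reals Lra.
From Coquelicot Require Import Coquelicot.
Open Scope R_scope.

(* A point of R^5 with coordinates (Sigma_+, Sigma_-, N_+, N_-, Omega). *)
Record State := mkState { Sp : R; Sm : R; Np : R; Nm : R; Om : R }.

Definition qstar (g : R) : R := (3 * g - 2) / 2.

Definition qfun (g : R) (x : State) : R :=
  2 * (Sp x ^ 2 + Sm x ^ 2) + qstar g * Om x.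

Definition is_solution (g : R) (sol : R -> State) : Prop :=
  forall t : R,
    let x := sol t in let q := qfun g x in
    derivable_pt_lim (fun s => Sp (sol s)) t (- (2 - q) * Sp x - 2 * Nm x ^ 2) /\
    derivable_pt_lim (fun s => Sm (sol s)) t
      (- (2 - q) * Sm x - 2 * sqrt 3 * Np x * Nm x) /\
    derivable_pt_lim (fun s => Np (sol s)) t
      ((q + 2 * Sp x) * Np x + 2 * sqrt 3 * Sm x * Nm x) /\
    derivable_pt_lim (fun s => Nm (sol s)) t
      ((q + 2 * Sp x) * Nm x + 2 * sqrt 3 * Sm x * Np x) /\
    derivable_pt_lim (fun s => Om (sol s)) t (2 * (q - qstar g) * Om x).

Definition inB (x : State) : Prop :=
  Om x + Sp x ^ 2 + Sm x ^ 2 + Nm x ^ 2 = 1 /\ 0 <= Om x /\ Rabs (Np x) < Nm x.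

Definition inS (x : State) : Prop := inB x /\ Sm x = 0 /\ Np x = 0.

Definition P1plus (g : R) : State :=
  mkState (- qstar g / 2) 0 0 (sqrt (qstar g * (2 - qstar g)) / 2) (1 - qstar g / 2).

Definition Fpt : State := mkState 0 0 0 0 1.
Definition Q1 : State := mkState 1 0 0 0 0.

Definition conv_minf (sol : R -> State) (p : State) : Prop :=
  is_lim (fun t => Sp (sol t)) m_infty (Sp p) /\
  is_lim (fun t => Sm (sol t)) m_infty (Sm p) /\
  is_lim (fun t => Np (sol t)) m_infty (Np p) /\
  is_lim (fun t => Nm (sol t)) m_infty (Nm p) /\
  is_lim (fun t => Om (sol t)) m_infty (Om p).

(* x lies in \mathscr{F}_{VI_0}, where sol is the flow line through x
   (sol 0 = x); solutions are unique, so this is phi^tau(x). *)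
Definition inFVI0 (sol : R -> State) (x : State) : Prop :=
  inB x /\ conv_minf sol Fpt.

From Stdlib Require Import Reals.
From Coquelicot Require Import Coquelicot.
From Stdlib Require Import Lra Psatz Classical.
Open Scope R_scope.

(** On the shear invariant set [Sigma_- = N_+ = 0] (invariant by a Gronwall argument)
    the flow reduces to a planar system for [s = Sigma_+] and
    [r = N_-^2 / (1 - Sigma_+^2)] in [(-1, 1) x (0, 1]], where [r = 1] is the vacuum
    [Omega = 0].  Backwards in time:
    - once [s >= 0], [s] increases monotonically to [1], i.e. the orbit tends to [Q_1];
    - otherwise (which excludes the vacuum) the function
      [(2 + q^* ) (ln (1 - s^2) - 2 ln (2 + q^* s)) + 2 ln (1 - r) + q^* ln r]
      increases along the flow and has its strict maximum at [P_1^+(VI_0)].  If it is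
      bounded below, a LaSalle argument (via Barbalat's lemma) makes the orbit emanate
      from [P_1^+(VI_0)], hence be that equilibrium.  If it is unbounded below,
      [u = 2 s + q^*] either is eventually positive, and the orbit comes from [F]; or
      eventually negative, and the orbit would come from the corner [(s, r) = (-1, 1)],
      which a second monotone quantity forbids; or changes sign infinitely often, and
      then it crosses [s = - q^*/2] arbitrarily close to [r = 1], where it can only
      come from [s > 0].

    The hypotheses on [x] rule out all but the first alternative. *)

Lemma Rabs_mult_le x y X Y : Rabs x <= X -> Rabs y <= Y -> Rabs (x * y) <= X * Y.
Proof. intros. rewrite Rabs_mult. apply Rmult_le_compat; auto; apply Rabs_pos. Qed.

Lemma Rabs_le_1_plus_sq a : Rabs a <= 1 + a ^ 2.
Proof. apply Rabs_le. split; nra. Qed.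

Lemma derivable_pt_lim_sq (f : R -> R) x l :
  derivable_pt_lim f x l -> derivable_pt_lim (fun t => f t ^ 2) x (2 * f x * l).
Proof.
  intros Hf.
  replace (2 * f x * l) with (l * f x + f x * l) by ring.
  apply (derivable_pt_lim_ext (fun t => f t * f t)); [intros; ring|].
  now apply derivable_pt_lim_mult.
Qed.

Lemma derivable_pt_lim_ln_comp (f : R -> R) x l :
  derivable_pt_lim f x l -> 0 < f x ->
  derivable_pt_lim (fun t => ln (f t)) x (l / f x).
Proof.
  intros Hf Hpos. replace (l / f x) with (/ f x * l) by (unfold Rdiv; ring).
  exact (derivable_pt_lim_comp f ln x l (/ f x) Hf (derivable_pt_lim_ln _ Hpos)).
Qed.

Lemma derivable_pt_lim_exp_comp (f : R -> R) x l :
  derivable_pt_lim f x l -> derivable_pt_lim (fun t => exp (f t)) x (exp (f x) * l).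
Proof.
  intros Hf. exact (derivable_pt_lim_comp f exp x l (exp (f x)) Hf (derivable_pt_lim_exp _)).
Qed.

Lemma derivable_pt_lim_eq_compat (f : R -> R) x l l' :
  derivable_pt_lim f x l -> l = l' -> derivable_pt_lim f x l'.
Proof. now intros Hf <-. Qed.

Ltac derive_step :=
  first
  [ match goal with
    | H : forall t, derivable_pt_lim ?f t _ |- derivable_pt_lim ?f _ _ => apply H
    end
  | apply derivable_pt_lim_const | apply derivable_pt_lim_id
  | apply derivable_pt_lim_plus | apply derivable_pt_lim_minus
  | apply derivable_pt_lim_opp | apply derivable_pt_lim_sq
  | apply derivable_pt_lim_div | apply derivable_pt_lim_mult
  | apply derivable_pt_lim_ln_comp | apply derivable_pt_lim_exp_comp ].

(** [derive] leaves the computed derivative to be identified with the claimed one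
    and the positivity/nonvanishing side conditions of [ln] and division. *)
Ltac derive := eapply derivable_pt_lim_eq_compat; [repeat derive_step | ]; cbv beta.

Lemma continuity_pt_of_derivable_pt_lim (f : R -> R) x l :
  derivable_pt_lim f x l -> continuity_pt f x.
Proof. intros H. apply derivable_continuous_pt. now exists l. Qed.

Lemma continuity_pt_near (f : R -> R) x eps : continuity_pt f x -> 0 < eps ->
  exists d, 0 < d /\ forall y, Rabs (y - x) < d -> Rabs (f y - f x) < eps.
Proof.
  intros Hf Heps. destruct (Hf eps Heps) as [d [Hd Hnear]].
  exists d; split; [exact Hd|]. intros y Hy.
  destruct (Req_dec y x) as [->|Hne].
  - rewrite Rminus_diag, Rabs_R0; exact Heps.
  - apply (Hnear y). repeat split; auto.
Qed.

Lemma derivable_pt_lim_gt_near (f : R -> R) x l k :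
  derivable_pt_lim f x l -> k < f x ->
  exists d, 0 < d /\ forall y, Rabs (y - x) < d -> k < f y.
Proof.
  intros Hf Hk.
  destruct (continuity_pt_near f x (f x - k) (continuity_pt_of_derivable_pt_lim f x l Hf))
    as [d [Hd Hnear]]; [lra|].
  exists d; split; [exact Hd|]. intros y Hy.
  specialize (Hnear y Hy). apply Rabs_lt_between in Hnear. lra.
Qed.

Lemma derivable_pt_lim_lt_near (f : R -> R) x l k :
  derivable_pt_lim f x l -> f x < k ->
  exists d, 0 < d /\ forall y, Rabs (y - x) < d -> f y < k.
Proof.
  intros Hf Hk.
  destruct (derivable_pt_lim_gt_near (fun t => - f t) x (- l) (- k)) as [d [Hd Hnear]].
  - now apply derivable_pt_lim_opp.
  - lra.
  - exists d; split; [exact Hd|]. intros y Hy. specialize (Hnear y Hy). lra.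
Qed.

Lemma derivable_pt_lim_pos_increasing_near (f : R -> R) c l :
  derivable_pt_lim f c l -> 0 < l ->
  exists d, 0 < d /\ forall h, 0 < h < d -> f (c - h) < f c /\ f c < f (c + h).
Proof.
  intros Hf Hl. destruct (Hf (l / 2)) as [d Hd]; [lra|].
  exists d; split; [apply cond_pos|]. intros h [Hh0 Hhd].
  assert (Hquot : forall k, k <> 0 -> Rabs k < d -> l / 2 < (f (c + k) - f c) / k).
  { intros k Hk Hkd. specialize (Hd k Hk Hkd). apply Rabs_lt_between in Hd. lra. }
  split.
  - specialize (Hquot (- h)). replace (c + - h) with (c - h) in Hquot by ring.
    assert (Hq : l / 2 < (f (c - h) - f c) / - h)
      by (apply Hquot; [lra | rewrite Rabs_Ropp, Rabs_right; lra]).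
    assert (Hdiff : (f (c - h) - f c) / - h * h = f c - f (c - h)) by (field; lra).
    nra.
  - assert (Hq : l / 2 < (f (c + h) - f c) / h)
      by (apply Hquot; [lra | rewrite Rabs_right; lra]).
    assert (Hdiff : (f (c + h) - f c) / h * h = f (c + h) - f c) by (field; lra).
    nra.
Qed.

Lemma derivable_pt_lim_neg_decreasing_near (f : R -> R) c l :
  derivable_pt_lim f c l -> l < 0 ->
  exists d, 0 < d /\ forall h, 0 < h < d -> f (c + h) < f c /\ f c < f (c - h).
Proof.
  intros Hf Hl.
  destruct (derivable_pt_lim_pos_increasing_near (fun t => - f t) c (- l)) as [d [Hd Hmono]].
  - now apply derivable_pt_lim_opp.
  - lra.
  - exists d; split; [exact Hd|]. intros h Hh. specialize (Hmono h Hh). lra.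
Qed.

Section MeanValue.

Variables (f df : R -> R).
Hypothesis Df : forall t, derivable_pt_lim f t (df t).

Lemma mvt_lower_bound a b k :
  a < b -> (forall t, a < t < b -> k <= df t) -> k * (b - a) <= f b - f a.
Proof.
  intros Hab Hk. destruct (MVT_cor2 f df a b Hab) as [c [Hc Hcab]]; [intros; apply Df|].
  rewrite Hc. apply Rmult_le_compat_r; [lra | auto].
Qed.

Lemma mvt_upper_bound a b k :
  a < b -> (forall t, a < t < b -> df t <= k) -> f b - f a <= k * (b - a).
Proof.
  intros Hab Hk. destruct (MVT_cor2 f df a b Hab) as [c [Hc Hcab]]; [intros; apply Df|].
  rewrite Hc. apply Rmult_le_compat_r; [lra | auto].
Qed.

Lemma mvt_abs_bound T K a b :
  (forall t, t <= T -> Rabs (df t) <= K) -> a <= b <= T -> Rabs (f b - f a) <= K * (b - a).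
Proof.
  intros HK [[Hab|<-] HbT].
  - apply Rabs_le; split.
    + assert (- K * (b - a) <= f b - f a); [|lra].
      apply mvt_lower_bound; [lra|]. intros t Ht.
      specialize (HK t ltac:(lra)). apply Rabs_le_between in HK. lra.
    + apply mvt_upper_bound; [lra|]. intros t Ht.
      specialize (HK t ltac:(lra)). apply Rabs_le_between in HK. lra.
  - rewrite !Rminus_diag, Rabs_R0. lra.
Qed.

Lemma nondecreasing_of_deriv_nonneg T :
  (forall t, t <= T -> 0 <= df t) -> forall a b, a <= b <= T -> f a <= f b.
Proof.
  intros Hpos a b [[Hab|<-] HbT]; [|lra].
  assert (0 * (b - a) <= f b - f a); [|lra].
  apply mvt_lower_bound; [lra|]. intros t Ht. apply Hpos. lra.
Qed.

Lemma nonincreasing_of_deriv_nonpos T :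
  (forall t, t <= T -> df t <= 0) -> forall a b, a <= b <= T -> f b <= f a.
Proof.
  intros Hneg a b [[Hab|<-] HbT]; [|lra].
  assert (f b - f a <= 0 * (b - a)); [|lra].
  apply mvt_upper_bound; [lra|]. intros t Ht. apply Hneg. lra.
Qed.

End MeanValue.

Lemma open_pred_last_failure (P : R -> Prop) a b :
  a < b -> P b -> ~ P a ->
  (forall t, P t -> exists d, 0 < d /\ forall y, Rabs (y - t) < d -> P y) ->
  exists c, a <= c < b /\ ~ P c /\ forall y, c < y <= b -> P y.
Proof.
  intros Hab Pb nPa Hopen.
  set (E := fun t => a <= t <= b /\ ~ P t).
  assert (HEb : bound E) by (exists b; intros t [Ht _]; lra).
  assert (HEa : exists t, E t) by (exists a; split; [lra | exact nPa]).
  destruct (completeness E HEb HEa) as [c [Hub Hlub]].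
  assert (Hac : a <= c) by (apply Hub; split; [lra | exact nPa]).
  assert (Hcb : c <= b) by (apply Hlub; intros t [Ht _]; lra).
  assert (nPc : ~ P c).
  { intros Pc. destruct (Hopen c Pc) as [d [Hd Hnear]].
    assert (c <= c - d / 2); [|lra].
    apply Hlub. intros t [Ht nPt]. destruct (Rle_lt_dec t (c - d / 2)) as [|Hlt]; [assumption|].
    exfalso. apply nPt, Hnear. assert (t <= c) by (apply Hub; split; assumption).
    rewrite Rabs_left1; lra. }
  exists c. split; [split; [exact Hac|] | split; [exact nPc|]].
  - destruct Hcb as [Hlt|Heq]; [exact Hlt | subst; contradiction].
  - intros y [Hcy Hyb]. apply NNPP. intros nPy.
    assert (y <= c) by (apply Hub; split; [lra | exact nPy]). lra.
Qed.

Lemma last_zero_before_neg (f df : R -> R) a b :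
  (forall t, derivable_pt_lim f t (df t)) -> a < b -> 0 <= f a -> f b < 0 ->
  exists c, a <= c < b /\ f c = 0 /\ df c <= 0 /\ forall y, c < y <= b -> f y < 0.
Proof.
  intros Df Hab Ha Hb.
  destruct (open_pred_last_failure (fun y => f y < 0) a b Hab Hb ltac:(lra)) as
    [c [Hc [nPc Hafter]]].
  { intros y Hy. apply (derivable_pt_lim_lt_near f y (df y) 0 (Df y) Hy). }
  assert (Hfc : f c = 0).
  { destruct (Rtotal_order (f c) 0) as [Hlt|[Heq|Hgt]]; [contradiction | exact Heq|].
    destruct (derivable_pt_lim_gt_near f c (df c) 0 (Df c) Hgt) as [d [Hd Hnear]].
    set (y := Rmin (c + d / 2) b).
    assert (Hy : c < y <= b) by (unfold y; apply Rmin_case_strong; lra).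
    assert (0 < f y) by (apply Hnear; unfold y; apply Rmin_case_strong; intros;
                         rewrite Rabs_right; lra).
    specialize (Hafter y Hy). lra. }
  exists c. repeat split; try lra; [|exact Hafter].
  apply Rnot_lt_le. intros Hdf.
  destruct (derivable_pt_lim_pos_increasing_near f c (df c) (Df c) Hdf) as [d [Hd Hincr]].
  set (h := Rmin (d / 2) (b - c)).
  assert (Hh : 0 < h < d) by (unfold h; apply Rmin_case_strong; lra).
  destruct (Hincr h Hh) as [_ Hup].
  assert (f (c + h) < 0) by (apply Hafter; unfold h; apply Rmin_case_strong; lra).
  lra.
Qed.

Lemma neg_before_of_upcrossings (f df : R -> R) t1 :
  (forall t, derivable_pt_lim f t (df t)) ->
  (forall t, t <= t1 -> f t = 0 -> 0 < df t) ->
  f t1 < 0 -> forall t, t <= t1 -> f t < 0.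
Proof.
  intros Df Hup Hneg t [Ht| ->]; [|exact Hneg].
  apply Rnot_le_lt. intros Hnonneg.
  destruct (last_zero_before_neg f df t t1 Df Ht Hnonneg Hneg) as [c [Hc [Hfc [Hdf _]]]].
  specialize (Hup c ltac:(lra) Hfc). lra.
Qed.

Lemma is_lim_minf_intro (f : R -> R) (l : R) :
  (forall eps, 0 < eps -> exists M, forall t, t < M -> Rabs (f t - l) < eps) ->
  is_lim f m_infty l.
Proof.
  intros H. apply is_lim_spec. intros eps.
  destruct (H eps (cond_pos eps)) as [M HM]. now exists M.
Qed.

Lemma is_lim_minf_elim (f : R -> R) (l : R) : is_lim f m_infty l ->
  forall eps, 0 < eps -> exists M, forall t, t < M -> Rabs (f t - l) < eps.
Proof.
  intros H eps Heps. apply is_lim_spec in H.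
  destruct (H (mkposreal eps Heps)) as [M HM]. now exists M.
Qed.

Lemma is_lim_mult_fin (f g : R -> R) x (a b : R) :
  is_lim f x a -> is_lim g x b -> is_lim (fun t => f t * g t) x (a * b).
Proof. intros Hf Hg. exact (is_lim_mult f g x a b Hf Hg I). Qed.

Lemma is_lim_opp_fin (f : R -> R) x (a : R) :
  is_lim f x a -> is_lim (fun t => - f t) x (- a).
Proof. exact (is_lim_opp f x a). Qed.

Lemma is_lim_div_fin (f g : R -> R) x (a b : R) :
  is_lim f x a -> is_lim g x b -> b <> 0 -> is_lim (fun t => f t / g t) x (a / b).
Proof.
  intros Hf Hg Hb. apply (is_lim_div f g x a b Hf Hg); [|exact I].
  intros Heq. apply Hb. now injection Heq.
Qed.

Lemma is_lim_sq (f : R -> R) x (a : R) :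
  is_lim f x a -> is_lim (fun t => f t ^ 2) x (a ^ 2).
Proof.
  intros Hf. replace (a ^ 2) with (a * a) by ring.
  apply (is_lim_ext (fun t => f t * f t)); [intros; ring|].
  now apply is_lim_mult_fin.
Qed.

Lemma is_lim_eq_compat (f : R -> R) x (a b : R) : is_lim f x a -> a = b -> is_lim f x b.
Proof. now intros Hf <-. Qed.

Lemma is_lim_minf_const_fun (f : R -> R) (c : R) : (forall t, f t = c) -> is_lim f m_infty c.
Proof. intros Hf. apply (is_lim_ext (fun _ => c)); [auto | apply is_lim_const]. Qed.

Lemma is_lim_ln (f : R -> R) x (a : R) :
  is_lim f x a -> 0 < a -> is_lim (fun t => ln (f t)) x (ln a).
Proof.
  intros Hf Ha. apply (is_lim_comp_continuous f ln x a Hf).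
  apply continuity_pt_filterlim.
  exact (continuity_pt_of_derivable_pt_lim ln a _ (derivable_pt_lim_ln a Ha)).
Qed.

Ltac lim_step :=
  first [ eassumption | apply is_lim_const | apply is_lim_plus' | apply is_lim_minus'
        | apply is_lim_div_fin | apply is_lim_mult_fin | apply is_lim_opp_fin
        | apply is_lim_sq | apply is_lim_ln ].

Ltac lim_tac := eapply is_lim_eq_compat; [repeat lim_step | ..].

Lemma is_lim_minf_nonneg_of_sq (f : R -> R) :
  (forall t, 0 <= f t) -> is_lim (fun t => f t ^ 2) m_infty 0 -> is_lim f m_infty 0.
Proof.
  intros Hpos Hsq. apply is_lim_minf_intro. intros eps Heps.
  destruct (is_lim_minf_elim _ 0 Hsq (eps * eps)) as [M HM]; [nra|].
  exists M. intros t Ht. specialize (HM t Ht). specialize (Hpos t).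
  rewrite Rminus_0_r in *. rewrite Rabs_right in * by nra.
  apply Rnot_le_lt. intros Hle. nra.
Qed.

Lemma is_lim_minf_nondecreasing (f : R -> R) T B :
  (forall a b, a <= b <= T -> f a <= f b) -> (forall t, t <= T -> B <= f t) ->
  exists l : R, is_lim f m_infty l /\ (forall t, t <= T -> l <= f t) /\ B <= l.
Proof.
  intros Hmono Hbnd.
  set (E := fun y => exists t, t <= T /\ y = - f t).
  assert (HEb : bound E)
    by (exists (- B); intros y [t [Ht ->]]; specialize (Hbnd t Ht); lra).
  assert (HEne : exists y, E y) by (exists (- f T), T; split; lra).
  destruct (completeness E HEb HEne) as [m [Hub Hlub]].
  assert (Hle : forall t, t <= T -> - f t <= m) by (intros t Ht; apply Hub; now exists t).
  exists (- m). split; [|split].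
  - apply is_lim_minf_intro. intros eps Heps.
    assert (Hnear : exists t, t <= T /\ m - eps < - f t).
    { apply NNPP. intros Hn. assert (m <= m - eps); [|lra].
      apply Hlub. intros y [t [Ht ->]]. apply Rnot_lt_le. intros Hlt.
      apply Hn. now exists t. }
    destruct Hnear as [t0 [Ht0 Hf0]]. exists t0. intros t Ht.
    assert (f t <= f t0) by (apply Hmono; lra).
    specialize (Hle t ltac:(lra)). rewrite Rabs_right; lra.
  - intros t Ht. specialize (Hle t Ht). lra.
  - assert (m <= - B); [|lra].
    apply Hlub. intros y [t [Ht ->]]. specialize (Hbnd t Ht). lra.
Qed.

Lemma is_lim_minf_nonincreasing (f : R -> R) T B :
  (forall a b, a <= b <= T -> f b <= f a) -> (forall t, t <= T -> f t <= B) ->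
  exists l : R, is_lim f m_infty l /\ (forall t, t <= T -> f t <= l) /\ l <= B.
Proof.
  intros Hmono Hbnd.
  destruct (is_lim_minf_nondecreasing (fun t => - f t) T (- B)) as [l [Hl [Hle HB]]].
  - intros a b Hab. specialize (Hmono a b Hab). lra.
  - intros t Ht. specialize (Hbnd t Ht). lra.
  - exists (- l). split; [|split].
    + apply (is_lim_ext (fun t => - - f t)); [intros; ring|]. now apply is_lim_opp_fin.
    + intros t Ht. specialize (Hle t Ht). lra.
    + lra.
Qed.

Lemma not_bounded_above_of_deriv_lim_neg (f df : R -> R) (D M T : R) :
  (forall t, derivable_pt_lim f t (df t)) -> is_lim df m_infty D -> D < 0 ->
  ~ (forall t, t <= T -> f t <= M).
Proof.
  intros Df Hlim HD Hbnd.
  destruct (is_lim_minf_elim df D Hlim (- D / 2)) as [M1 HM1]; [lra|].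
  set (T1 := Rmin T (M1 - 1)).
  assert (HT1 : T1 <= T /\ T1 < M1) by (unfold T1; split; apply Rmin_case_strong; lra).
  set (len := (M - f T1 + 1) * (2 / - D) + 1).
  assert (Hlen : 1 <= len).
  { assert (f T1 <= M) by (apply Hbnd; lra).
    assert (0 <= (M - f T1 + 1) * (2 / - D)); [|unfold len; lra].
    apply Rmult_le_pos; [lra|]. apply Rlt_le, Rdiv_lt_0_compat; lra. }
  assert (Hgrow : f T1 - f (T1 - len) <= D / 2 * (T1 - (T1 - len))).
  { apply (mvt_upper_bound f df Df); [lra|]. intros t Ht.
    specialize (HM1 t ltac:(lra)). apply Rabs_lt_between in HM1. lra. }
  assert (f (T1 - len) <= M) by (apply Hbnd; lra).
  assert (D / 2 * len = - (M - f T1 + 1) + D / 2) by (unfold len; field; lra).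
  replace (T1 - (T1 - len)) with len in Hgrow by ring.
  lra.
Qed.

Lemma deriv_lim_minf_eq0 (f df : R -> R) (l D : R) :
  (forall t, derivable_pt_lim f t (df t)) ->
  is_lim f m_infty l -> is_lim df m_infty D -> D = 0.
Proof.
  intros Df Hf Hdf. destruct (is_lim_minf_elim f l Hf 1 Rlt_0_1) as [M HM].
  destruct (Rtotal_order D 0) as [Hneg|[Heq|Hpos]]; [exfalso| exact Heq | exfalso].
  - apply (not_bounded_above_of_deriv_lim_neg f df D (l + 1) (M - 1) Df Hdf Hneg).
    intros t Ht. specialize (HM t ltac:(lra)). apply Rabs_lt_between in HM. lra.
  - apply (not_bounded_above_of_deriv_lim_neg (fun t => - f t) (fun t => - df t)
             (- D) (1 - l) (M - 1)).
    + intros t. now apply derivable_pt_lim_opp.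
    + now apply is_lim_opp_fin.
    + lra.
    + intros t Ht. specialize (HM t ltac:(lra)). apply Rabs_lt_between in HM. lra.
Qed.

Lemma lim_minf_increment_small (f : R -> R) (l : R) : is_lim f m_infty l ->
  forall len eta, 0 < eta -> exists M, forall t, t < M -> Rabs (f t - f (t - len)) < eta.
Proof.
  intros Hf len eta Heta.
  destruct (is_lim_minf_elim f l Hf (eta / 2)) as [M HM]; [lra|].
  exists (Rmin M (M + len)). intros t Ht.
  assert (Ht1 : t < M) by (revert Ht; apply Rmin_case_strong; lra).
  assert (Ht2 : t - len < M) by (revert Ht; apply Rmin_case_strong; lra).
  pose proof (HM t Ht1) as Hnow. pose proof (HM (t - len) Ht2) as Hbefore.
  apply Rabs_lt_between in Hnow. apply Rabs_lt_between in Hbefore.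
  apply Rabs_lt_between. lra.
Qed.

(** A Barbalat-type lemma: were [|h t| >= eps] arbitrarily far back, the Lipschitz
    bound would keep [|h| >= eps / 2] on a window of fixed length before [t], on
    which [f] would gain a fixed amount, against the convergence of [f]. *)
Lemma is_lim_minf_zero_of_sq_le_deriv (f df h dh : R -> R) (l K T : R) :
  (forall t, derivable_pt_lim f t (df t)) -> (forall t, derivable_pt_lim h t (dh t)) ->
  (forall t, t <= T -> Rabs (dh t) <= K) -> (forall t, t <= T -> h t ^ 2 <= df t) ->
  is_lim f m_infty l -> is_lim h m_infty 0.
Proof.
  intros Df Dh HK Hsq Hf. apply is_lim_minf_intro. intros eps Heps.
  set (K' := Rabs K + 1).
  assert (HK' : forall t, t <= T -> Rabs (dh t) <= K')
    by (intros t Ht; specialize (HK t Ht); unfold K'; pose proof (Rle_abs K); lra).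
  set (len := eps / (2 * K')).
  assert (Hlen : 0 < len /\ K' * len = eps / 2)
    by (pose proof (Rabs_pos K); unfold len, K'; split;
        [apply Rdiv_lt_0_compat; lra | field; lra]).
  destruct (lim_minf_increment_small f l Hf len (eps * eps / 4 * len)) as [M HM];
    [apply Rmult_lt_0_compat; nra|].
  exists (Rmin M T). intros t Ht. rewrite Rminus_0_r.
  apply Rnot_le_lt. intros Hbig.
  assert (HtM : t < M /\ t <= T) by (revert Ht; apply Rmin_case_strong; lra).
  assert (Hrate : eps * eps / 4 * (t - (t - len)) <= f t - f (t - len)).
  { apply (mvt_lower_bound f df Df); [lra|]. intros y Hy.
    assert (Hlip : Rabs (h t - h y) <= K' * (t - y))
      by (apply (mvt_abs_bound h dh Dh T); [exact HK' | lra]).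
    assert (Hhy : eps / 2 <= Rabs (h y)).
    { pose proof (Rabs_triang_inv (h t) (h y)). nra. }
    assert (eps * eps / 4 <= h y ^ 2).
    { replace (h y ^ 2) with (Rabs (h y) * Rabs (h y))
        by (rewrite <- Rabs_mult, Rabs_right; [ring | nra]).
      nra. }
    specialize (Hsq y ltac:(lra)). lra. }
  specialize (HM t (proj1 HtM)). apply Rabs_lt_between in HM. lra.
Qed.

(** Barbalat's lemma, same argument. *)
Lemma is_lim_minf_deriv_zero (f df ddf : R -> R) (l K T : R) :
  (forall t, derivable_pt_lim f t (df t)) -> (forall t, derivable_pt_lim df t (ddf t)) ->
  (forall t, t <= T -> Rabs (ddf t) <= K) -> is_lim f m_infty l -> is_lim df m_infty 0.
Proof.
  intros Df Ddf HK Hf. apply is_lim_minf_intro. intros eps Heps.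
  set (K' := Rabs K + 1).
  assert (HK' : forall t, t <= T -> Rabs (ddf t) <= K')
    by (intros t Ht; specialize (HK t Ht); unfold K'; pose proof (Rle_abs K); lra).
  set (len := eps / (2 * K')).
  assert (Hlen : 0 < len /\ K' * len = eps / 2)
    by (pose proof (Rabs_pos K); unfold len, K'; split;
        [apply Rdiv_lt_0_compat; lra | field; lra]).
  destruct (lim_minf_increment_small f l Hf len (eps / 2 * len)) as [M HM];
    [apply Rmult_lt_0_compat; lra|].
  exists (Rmin M T). intros t Ht. rewrite Rminus_0_r.
  apply Rnot_le_lt. intros Hbig.
  assert (HtM : t < M /\ t <= T) by (revert Ht; apply Rmin_case_strong; lra).
  assert (Hclose : forall y, t - len < y < t -> Rabs (df t - df y) <= eps / 2).
  { intros y Hy.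
    assert (Rabs (df t - df y) <= K' * (t - y))
      by (apply (mvt_abs_bound df ddf Ddf T); [exact HK' | lra]).
    nra. }
  specialize (HM t (proj1 HtM)). apply Rabs_lt_between in HM.
  destruct (Rle_lt_dec 0 (df t)) as [Hpos|Hneg].
  - assert (eps / 2 * (t - (t - len)) <= f t - f (t - len)); [|lra].
    apply (mvt_lower_bound f df Df); [lra|]. intros y Hy.
    specialize (Hclose y Hy). rewrite Rabs_right in Hbig by lra.
    apply Rabs_le_between in Hclose. lra.
  - assert (f t - f (t - len) <= - (eps / 2) * (t - (t - len))); [|lra].
    apply (mvt_upper_bound f df Df); [lra|]. intros y Hy.
    specialize (Hclose y Hy). rewrite Rabs_left in Hbig by lra.
    apply Rabs_le_between in Hclose. lra.
Qed.

Section LinearGrowth.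

Variables (g dg k : R -> R).
Hypothesis Dg : forall t, derivable_pt_lim g t (dg t).
Hypothesis Ck : forall t, continuity_pt k t.
Hypothesis Hgrowth : forall t, Rabs (dg t) <= k t * Rabs (g t).

Lemma linear_growth_vanish_forward t0 t1 : t0 < t1 -> g t0 = 0 -> g t1 = 0.
Proof.
  intros Ht Hg0.
  destruct (continuity_ab_maj k t0 t1 ltac:(lra) (fun c _ => Ck c)) as [tmax [Hmax _]].
  set (K := k tmax).
  set (w := fun t => g t ^ 2 * exp (- (2 * K) * t)).
  set (dw := fun t => (2 * g t * dg t - 2 * K * g t ^ 2) * exp (- (2 * K) * t)).
  assert (Dw : forall t, derivable_pt_lim w t (dw t))
    by (intros t; unfold w, dw; derive; ring).
  assert (Hdecr : w t1 - w t0 <= 0 * (t1 - t0)).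
  { apply (mvt_upper_bound w dw Dw); [exact Ht|]. intros t Htt. unfold dw.
    assert (Hprod : g t * dg t <= k t * g t ^ 2).
    { specialize (Hgrowth t). pose proof (Rle_abs (g t * dg t)) as Habs.
      rewrite Rabs_mult in Habs. pose proof (Rabs_pos (g t)).
      replace (g t ^ 2) with (Rabs (g t) * Rabs (g t))
        by (rewrite <- Rabs_mult, Rabs_right; [ring | nra]).
      nra. }
    assert (k t <= K) by (apply Hmax; lra).
    assert (2 * g t * dg t - 2 * K * g t ^ 2 <= 0) by (pose proof (pow2_ge_0 (g t)); nra).
    pose proof (exp_pos (- (2 * K) * t)). nra. }
  unfold w in Hdecr. rewrite Hg0 in Hdecr.
  assert (Hw : g t1 ^ 2 * exp (- (2 * K) * t1) <= 0) by lra.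
  pose proof (exp_pos (- (2 * K) * t1)). pose proof (pow2_ge_0 (g t1)).
  assert (g t1 ^ 2 = 0) by nra. nra.
Qed.

End LinearGrowth.

Lemma linear_growth_vanish (g dg k : R -> R) t0 :
  (forall t, derivable_pt_lim g t (dg t)) -> (forall t, continuity_pt k t) ->
  (forall t, Rabs (dg t) <= k t * Rabs (g t)) -> g t0 = 0 -> forall t, g t = 0.
Proof.
  intros Dg Ck Hgrowth Hg0 t.
  destruct (Rtotal_order t0 t) as [Hlt|[<-|Hgt]].
  - exact (linear_growth_vanish_forward g dg k Dg Ck Hgrowth t0 t Hlt Hg0).
  - exact Hg0.
  - assert (Dg' : forall y, derivable_pt_lim (fun y => g (- y)) y (- dg (- y))).
    { intros y. replace (- dg (- y)) with (dg (- y) * -1) by ring.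
      apply (derivable_pt_lim_comp Ropp g); [|apply Dg].
      apply (derivable_pt_lim_eq_compat _ _ (-1 * 1)); [|ring].
      apply (derivable_pt_lim_ext (fun y => -1 * y)); [intros; ring|].
      apply derivable_pt_lim_scal, derivable_pt_lim_id. }
    assert (Ck' : forall y, continuity_pt (fun y => k (- y)) y).
    { intros y. apply (continuity_pt_comp Ropp k);
        [apply continuity_pt_opp, continuity_pt_id | apply Ck]. }
    assert (Hgrowth' : forall y, Rabs (- dg (- y)) <= k (- y) * Rabs (g (- y)))
      by (intros y; rewrite Rabs_Ropp; apply Hgrowth).
    replace t with (- - t) by ring.
    apply (linear_growth_vanish_forward _ _ _ Dg' Ck' Hgrowth' (- t0));
      [lra | now rewrite Ropp_involutive].
Qed.

Lemma linear_growth_pos (f df k : R -> R) t0 :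
  (forall t, derivable_pt_lim f t (df t)) -> (forall t, continuity_pt k t) ->
  (forall t, Rabs (df t) <= k t * Rabs (f t)) -> 0 < f t0 -> forall t, 0 < f t.
Proof.
  intros Df Ck Hgrowth Hpos t. apply Rnot_le_lt. intros Hle.
  assert (Cf : continuity f) by (intros y; exact (continuity_pt_of_derivable_pt_lim f y _ (Df y))).
  assert (Hzero : exists z, f z = 0).
  { destruct Hle as [Hlt|Heq]; [|now exists t].
    destruct (Rtotal_order t t0) as [Hlt'|[->|Hgt]]; [| lra |].
    - destruct (IVT f t t0 Cf Hlt' Hlt Hpos) as [z [_ Hz]]. now exists z.
    - destruct (IVT (fun y => - f y) t0 t (continuity_opp f Cf) Hgt ltac:(lra) ltac:(lra))
        as [z [_ Hz]].
      exists z. lra. }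
  destruct Hzero as [z Hz].
  pose proof (linear_growth_vanish f df k z Df Ck Hgrowth Hz t0). lra.
Qed.

(** * The planar system on the shear invariant set *)

(** In the planar system [Q] stands for [q^*] (see [shear_alpha_limit]). *)
Definition Gsr (Q s r : R) : R := 2 * r * (1 + s) + (2 - Q) * (1 - r) * s.

Definition Fsr (Q s r : R) : R := (1 - s ^ 2) * Gsr Q s r.

(** The derivative of [Fsr] along the flow. *)
Definition Fsr_dot (Q s r : R) : R :=
  2 * s * Fsr Q s r * Gsr Q s r
  + (1 - s ^ 2) * ((2 * r + (2 - Q) * (1 - r)) * (- Fsr Q s r)
                   + (2 + Q * s) * (2 * r * (1 - r) * (2 * s + Q))).

(** The equilibrium [P_1^+(VI_0)] is [(s, r) = (- Q / 2, rP1 Q)]. *)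
Definition rP1 (Q : R) : R := Q / (2 + Q).

Definition lyap_s (Q s : R) : R := ln (1 - s ^ 2) - 2 * ln (2 + Q * s).
Definition lyap_r (Q r : R) : R := 2 * ln (1 - r) + Q * ln r.
Definition lyap (Q s r : R) : R := (2 + Q) * lyap_s Q s + lyap_r Q r.

Lemma rP1_bounds Q : 0 < Q < 2 -> 0 < rP1 Q < 1.
Proof.
  intros HQ. unfold rP1. split; [apply Rdiv_lt_0_compat; lra|].
  apply Rmult_lt_reg_r with (2 + Q); [lra|].
  unfold Rdiv. rewrite Rmult_assoc, Rinv_l; lra.
Qed.

Lemma Gsr_at_sP1 Q r : Gsr Q (- Q / 2) r = (2 - Q) * ((2 + Q) * r - Q) / 2.
Proof. unfold Gsr. field. Qed.

Lemma Gsr_at_sP1_eq0 Q r : 0 < Q < 2 -> Gsr Q (- Q / 2) r = 0 -> r = rP1 Q.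
Proof.
  intros HQ HG. rewrite Gsr_at_sP1 in HG. unfold rP1.
  apply Rmult_eq_reg_l with ((2 - Q) * (2 + Q)); [|nra].
  field_simplify; lra.
Qed.

Lemma Gsr_at_sP1_nonneg Q r : 0 < Q < 2 -> 0 <= Gsr Q (- Q / 2) r -> rP1 Q <= r.
Proof.
  intros HQ HG. rewrite Gsr_at_sP1 in HG. unfold rP1.
  apply Rmult_le_reg_l with (2 + Q); [lra|].
  replace ((2 + Q) * (Q / (2 + Q))) with Q by (field; lra).
  apply Rmult_le_reg_l with ((2 - Q) / 2); lra.
Qed.

Lemma lyap_s_le_sP1 Q s : 0 < Q < 2 -> -1 < s < 1 ->
  lyap_s Q s <= lyap_s Q (- Q / 2) /\ (lyap_s Q s = lyap_s Q (- Q / 2) -> s = - Q / 2).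
Proof.
  intros HQ Hs.
  assert (Hln : forall x, -1 < x < 1 ->
            lyap_s Q x = ln ((1 - x ^ 2) / ((2 + Q * x) * (2 + Q * x)))).
  { intros x Hx. unfold lyap_s, Rdiv.
    assert (0 < 1 - x ^ 2) by nra. assert (0 < 2 + Q * x) by nra.
    rewrite ln_mult, ln_Rinv, ln_mult; try nra. apply Rinv_0_lt_compat; nra. }
  rewrite !Hln by lra.
  assert (0 < 2 + Q * s) by nra.
  assert (Hprod : 0 < (4 - Q ^ 2) * ((2 + Q * s) * (2 + Q * s))) by (apply Rmult_lt_0_compat; nra).
  assert (Hmax : (1 - (- Q / 2) ^ 2) / ((2 + Q * (- Q / 2)) * (2 + Q * (- Q / 2)))
                 = / (4 - Q ^ 2)) by (field; repeat split; nra).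
  (* the gap to the maximum is a perfect square *)
  assert (Hgap : / (4 - Q ^ 2) - (1 - s ^ 2) / ((2 + Q * s) * (2 + Q * s))
                 = (2 * s + Q) ^ 2 / ((4 - Q ^ 2) * ((2 + Q * s) * (2 + Q * s))))
    by (field; repeat split; nra).
  rewrite Hmax.
  assert (Hpos : 0 < (1 - s ^ 2) / ((2 + Q * s) * (2 + Q * s))) by (apply Rdiv_lt_0_compat; nra).
  split.
  - apply ln_le; [exact Hpos|].
    assert (0 <= (2 * s + Q) ^ 2 / ((4 - Q ^ 2) * ((2 + Q * s) * (2 + Q * s)))); [|lra].
    apply Rmult_le_pos; [apply pow2_ge_0 | apply Rlt_le, Rinv_0_lt_compat, Hprod].
  - intros Heq. apply NNPP. intros Hne.
    assert (0 < (2 * s + Q) ^ 2 / ((4 - Q ^ 2) * ((2 + Q * s) * (2 + Q * s)))).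
    { apply Rdiv_lt_0_compat; [|exact Hprod]. assert (2 * s + Q <> 0) by (intro; apply Hne; lra). nra. }
    pose proof (ln_increasing _ (/ (4 - Q ^ 2)) Hpos ltac:(lra)). lra.
Qed.

Lemma lyap_r_le_rP1 Q r : 0 < Q < 2 -> 0 < r < 1 ->
  lyap_r Q r <= lyap_r Q (rP1 Q) /\ (lyap_r Q r = lyap_r Q (rP1 Q) -> r = rP1 Q).
Proof.
  intros HQ Hr. unfold lyap_r.
  assert (HQp : (2 + Q) * rP1 Q = Q) by (unfold rP1; field; lra).
  pose proof (rP1_bounds Q HQ) as HP.
  set (p := rP1 Q) in *.
  assert (Ha : 0 < (1 - r) / (1 - p)) by (apply Rdiv_lt_0_compat; lra).
  assert (Hb : 0 < r / p) by (apply Rdiv_lt_0_compat; lra).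
  assert (Ea : ln (1 - r) = ln ((1 - r) / (1 - p)) + ln (1 - p))
    by (rewrite <- ln_mult; try lra; f_equal; field; lra).
  assert (Eb : ln r = ln (r / p) + ln p)
    by (rewrite <- ln_mult; try lra; f_equal; field; lra).
  (* the weights 2 and Q make the linear parts of ln x <= x - 1 cancel *)
  assert (Hcancel : 2 * ((1 - r) / (1 - p) - 1) + Q * (r / p - 1) = 0).
  { apply Rmult_eq_reg_r with (p * (1 - p)); [|nra]. field_simplify; try lra. nra. }
  assert (Hln_le : forall y, 0 < y -> ln y <= y - 1).
  { intros y Hy. pose proof (exp_ineq1_le (ln y)). rewrite exp_ln in *; lra. }
  pose proof (Hln_le _ Ha). pose proof (Hln_le _ Hb).
  rewrite Ea, Eb. split; [nra|].
  intros Heq. apply NNPP. intros Hne.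
  assert (Hne1 : (1 - r) / (1 - p) <> 1).
  { intros H1. apply Hne. apply Rmult_eq_compat_r with (r := 1 - p) in H1.
    unfold Rdiv in H1. rewrite Rmult_assoc, Rinv_l, Rmult_1_r, Rmult_1_l in H1; lra. }
  pose proof (exp_ineq1 (ln ((1 - r) / (1 - p))) (ln_neq_0 _ Hne1 Ha)).
  rewrite exp_ln in * by exact Ha. nra.
Qed.

Lemma lyap_le_P1 Q s r : 0 < Q < 2 -> -1 < s < 1 -> 0 < r < 1 ->
  lyap Q s r <= lyap Q (- Q / 2) (rP1 Q) /\
  (lyap Q s r = lyap Q (- Q / 2) (rP1 Q) -> s = - Q / 2 /\ r = rP1 Q).
Proof.
  intros HQ Hs Hr. unfold lyap.
  destruct (lyap_s_le_sP1 Q s HQ Hs) as [Hs_le Hs_eq].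
  destruct (lyap_r_le_rP1 Q r HQ Hr) as [Hr_le Hr_eq].
  split; [nra|]. intros Heq. split; [apply Hs_eq | apply Hr_eq]; nra.
Qed.

Lemma Gsr_abs_le Q s r : 0 < Q < 2 -> -1 < s < 1 -> 0 <= r <= 1 -> Rabs (Gsr Q s r) <= 6.
Proof.
  intros HQ Hs Hr. unfold Gsr.
  assert (0 <= r * (1 + s) <= 2) by (split; nra).
  assert (0 <= (2 - Q) * (1 - r) <= 2) by (split; nra).
  apply Rabs_le. split; nra.
Qed.

Lemma Fsr_abs_le Q s r : 0 < Q < 2 -> -1 < s < 1 -> 0 <= r <= 1 -> Rabs (Fsr Q s r) <= 6.
Proof.
  intros HQ Hs Hr. unfold Fsr. replace 6 with (1 * 6) by ring.
  apply Rabs_mult_le; [apply Rabs_le; nra | now apply Gsr_abs_le].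
Qed.

Lemma Fsr_dot_abs_le Q s r : 0 < Q < 2 -> -1 < s < 1 -> 0 <= r <= 1 ->
  Rabs (Fsr_dot Q s r) <= 104.
Proof.
  intros HQ Hs Hr. unfold Fsr_dot.
  pose proof (Gsr_abs_le Q s r HQ Hs Hr) as HG. pose proof (Fsr_abs_le Q s r HQ Hs Hr) as HF.
  assert (Hs2 : Rabs (1 - s ^ 2) <= 1) by (apply Rabs_le; nra).
  assert (Hterm1 : Rabs (2 * s * Fsr Q s r * Gsr Q s r) <= 2 * 6 * 6).
  { apply Rabs_mult_le; [|exact HG]. apply Rabs_mult_le; [apply Rabs_le; lra | exact HF]. }
  assert (Hterm2 : Rabs ((1 - s ^ 2) * ((2 * r + (2 - Q) * (1 - r)) * (- Fsr Q s r)))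
                   <= 1 * (4 * 6)).
  { apply Rabs_mult_le; [exact Hs2|]. apply Rabs_mult_le; [apply Rabs_le; nra|].
    now rewrite Rabs_Ropp. }
  assert (Hterm3 : Rabs ((1 - s ^ 2) * ((2 + Q * s) * (2 * r * (1 - r) * (2 * s + Q))))
                   <= 1 * (4 * (1 / 2 * 4))).
  { apply Rabs_mult_le; [exact Hs2|]. apply Rabs_mult_le; [apply Rabs_le; nra|].
    pose proof (pow2_ge_0 (2 * r - 1)).
    apply Rabs_mult_le; apply Rabs_le; [split; nra | lra]. }
  rewrite Rmult_plus_distr_l.
  eapply Rle_trans; [apply Rabs_triang|].
  eapply Rle_trans; [apply Rplus_le_compat_l, Rabs_triang|]. lra.
Qed.

Definition s_lo (Q : R) : R := - Q / 2 - (2 - Q) ^ 2 / 16.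
Definition F_lo (Q : R) : R := (1 - s_lo Q ^ 2) * ((2 - Q) ^ 2 / 8).

Lemma s_lo_bounds Q : 0 < Q < 2 -> -1 < s_lo Q < - Q / 2.
Proof. intros HQ. unfold s_lo. nra. Qed.

Lemma F_lo_pos Q : 0 < Q < 2 -> 0 < F_lo Q.
Proof.
  intros HQ. pose proof (s_lo_bounds Q HQ). unfold F_lo.
  apply Rmult_lt_0_compat; nra.
Qed.

Lemma F_lo_le_Fsr Q s r : 0 < Q < 2 -> 1 / 2 < r < 1 -> s_lo Q < s < 0 ->
  F_lo Q <= Fsr Q s r.
Proof.
  intros HQ Hr Hs. pose proof (s_lo_bounds Q HQ). unfold F_lo, Fsr.
  apply Rmult_le_compat; [nra | nra | nra |].
  assert (Hsplit : Gsr Q s r - (2 - Q) ^ 2 / 8 =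
                   (r - 1 / 2) * (2 + Q * s) + (s - s_lo Q) * ((4 - Q) / 2)
                   + (2 - Q) ^ 2 * Q / 32) by (unfold Gsr, s_lo; field).
  assert (0 <= (r - 1 / 2) * (2 + Q * s)) by (apply Rmult_le_pos; nra).
  assert (0 <= (s - s_lo Q) * ((4 - Q) / 2)) by (apply Rmult_le_pos; lra).
  assert (0 <= (2 - Q) ^ 2 * Q / 32) by (apply Rmult_le_pos; [apply Rmult_le_pos|]; nra).
  lra.
Qed.

Lemma Fsr_dominates_r_drift Q s r : 0 < Q < 2 -> 1 / 2 < r < 1 -> s_lo Q < s < 0 ->
  2 * r * (2 * s + Q) <= 2 * Q / F_lo Q * Fsr Q s r.
Proof.
  intros HQ Hr Hs. pose proof (F_lo_pos Q HQ). pose proof (F_lo_le_Fsr Q s r HQ Hr Hs).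
  assert (2 * Q / F_lo Q * F_lo Q <= 2 * Q / F_lo Q * Fsr Q s r)
    by (apply Rmult_le_compat_l; [apply Rlt_le, Rdiv_lt_0_compat|]; lra).
  replace (2 * Q / F_lo Q * F_lo Q) with (2 * Q) in * by (field; lra).
  nra.
Qed.

Section Planar.

Variables (Q : R) (s r : R -> R).
Hypothesis HQ : 0 < Q < 2.
Hypothesis Ds : forall t, derivable_pt_lim s t (- Fsr Q (s t) (r t)).
Hypothesis Dr : forall t, derivable_pt_lim r t (2 * r t * (1 - r t) * (2 * s t + Q)).
Hypothesis Hs : forall t, -1 < s t < 1.
Hypothesis Hr : forall t, 0 < r t <= 1.

Definition starts_at_P1 : Prop := s 0 = - Q / 2 /\ r 0 = rP1 Q.

Lemma lim_minf_stationary (a b : R) : is_lim s m_infty a -> is_lim r m_infty b ->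
  Fsr Q a b = 0 /\ b * (1 - b) * (2 * a + Q) = 0.
Proof.
  intros Ha Hb. split.
  - assert (- Fsr Q a b = 0); [|lra].
    apply (deriv_lim_minf_eq0 s _ a _ Ds Ha). unfold Fsr, Gsr. lim_tac. ring.
  - assert (2 * b * (1 - b) * (2 * a + Q) = 0); [|lra].
    apply (deriv_lim_minf_eq0 r _ b _ Dr Hb). lim_tac. ring.
Qed.

Lemma u_deriv t :
  derivable_pt_lim (fun t => 2 * s t + Q) t (- (2 * Fsr Q (s t) (r t))).
Proof. derive. ring. Qed.

Lemma Gsr_deriv t :
  derivable_pt_lim (fun t => Gsr Q (s t) (r t)) t
    ((2 * r t + (2 - Q) * (1 - r t)) * (- Fsr Q (s t) (r t))
     + (2 + Q * s t) * (2 * r t * (1 - r t) * (2 * s t + Q))).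
Proof. unfold Gsr. derive. ring. Qed.

Lemma s_nonincreasing_of_Gsr_nonneg T :
  (forall t, t <= T -> 0 <= Gsr Q (s t) (r t)) -> forall a b, a <= b <= T -> s b <= s a.
Proof.
  intros HG. apply (nonincreasing_of_deriv_nonpos s _ Ds T). intros t Ht.
  specialize (HG t Ht). pose proof (Hs t). unfold Fsr.
  assert (0 <= (1 - s t ^ 2) * Gsr Q (s t) (r t)) by (apply Rmult_le_pos; nra). lra.
Qed.

Lemma s_nondecreasing_of_Gsr_nonpos T :
  (forall t, t <= T -> Gsr Q (s t) (r t) <= 0) -> forall a b, a <= b <= T -> s a <= s b.
Proof.
  intros HG. apply (nondecreasing_of_deriv_nonneg s _ Ds T). intros t Ht.
  specialize (HG t Ht). pose proof (Hs t). unfold Fsr.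
  assert (0 <= (1 - s t ^ 2) * - Gsr Q (s t) (r t)) by (apply Rmult_le_pos; nra). lra.
Qed.

Lemma r_nondecreasing_of_u_nonneg T :
  (forall t, t <= T -> 0 <= 2 * s t + Q) -> forall a b, a <= b <= T -> r a <= r b.
Proof.
  intros Hu. apply (nondecreasing_of_deriv_nonneg r _ Dr T). intros t Ht.
  specialize (Hu t Ht). pose proof (Hr t).
  apply Rmult_le_pos; [apply Rmult_le_pos|]; lra.
Qed.

Lemma r_nonincreasing_of_u_nonpos T :
  (forall t, t <= T -> 2 * s t + Q <= 0) -> forall a b, a <= b <= T -> r b <= r a.
Proof.
  intros Hu. apply (nonincreasing_of_deriv_nonpos r _ Dr T). intros t Ht.
  specialize (Hu t Ht). pose proof (Hr t).
  assert (0 <= 2 * r t * (1 - r t)) by (apply Rmult_le_pos; lra). nra.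
Qed.

Lemma lim_minf_s_1_of_nonneg : (exists t0, t0 <= 0 /\ 0 <= s t0) -> is_lim s m_infty 1.
Proof.
  intros [t0 [Ht0 Hs0]].
  assert (Hstart : exists t1, t1 <= t0 /\ 0 < s t1).
  { destruct Hs0 as [Hpos|Hzero]; [exists t0; split; lra|].
    destruct (derivable_pt_lim_neg_decreasing_near s t0 _ (Ds t0)) as [d [Hd Hdecr]].
    { rewrite <- Hzero. unfold Fsr, Gsr. pose proof (Hr t0). nra. }
    exists (t0 - d / 2). split; [lra|]. destruct (Hdecr (d / 2)) as [_ Hlt]; lra. }
  destruct Hstart as [t1 [Ht1 Hs1]].
  assert (Hpos : forall t, t <= t1 -> 0 < s t).
  { intros t Ht. assert (- s t < 0); [|lra].
    apply (neg_before_of_upcrossings (fun t => - s t) (fun t => Fsr Q (s t) (r t)) t1);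
      [| | lra | exact Ht].
    - intros y. apply (derivable_pt_lim_eq_compat _ _ (- - Fsr Q (s y) (r y))); [|ring].
      now apply derivable_pt_lim_opp.
    - intros y _ Hy. replace (s y) with 0 by lra. unfold Fsr, Gsr. pose proof (Hr y). nra. }
  assert (HGpos : forall t, t <= t1 -> 0 <= Gsr Q (s t) (r t)).
  { intros t Ht. specialize (Hpos t Ht). pose proof (Hr t). unfold Gsr.
    assert (0 < r t * (1 + s t)) by (apply Rmult_lt_0_compat; lra).
    assert (0 <= (2 - Q) * (1 - r t) * s t) by (repeat apply Rmult_le_pos; lra). lra. }
  destruct (is_lim_minf_nonincreasing s t1 1 (s_nonincreasing_of_Gsr_nonneg t1 HGpos))
    as [l [Hl [Hl_ge Hl_le]]]; [intros t _; pose proof (Hs t); lra|].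
  destruct (is_lim_minf_nondecreasing r t1 0) as [lr [Hlr [Hlr_le Hlr_ge]]].
  { apply r_nondecreasing_of_u_nonneg. intros t Ht. specialize (Hpos t Ht). lra. }
  { intros t _. pose proof (Hr t). lra. }
  destruct (lim_minf_stationary l lr Hl Hlr) as [Hstat _].
  assert (Hl_pos : s t1 <= l) by (apply Hl_ge; lra).
  assert (lr <= 1) by (specialize (Hlr_le t1 ltac:(lra)); pose proof (Hr t1); lra).
  assert (HGl : 0 < Gsr Q l lr).
  { replace (Gsr Q l lr) with ((2 - Q) * l + lr * (2 + Q * l)) by (unfold Gsr; ring).
    assert (0 <= lr * (2 + Q * l)) by (apply Rmult_le_pos; nra).
    assert (0 < (2 - Q) * l) by (apply Rmult_lt_0_compat; lra). lra. }
  unfold Fsr in Hstat.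
  assert (Hl1 : 1 - l ^ 2 = 0) by (apply Rmult_eq_reg_r with (Gsr Q l lr); lra).
  replace 1 with l by nra. exact Hl.
Qed.

Lemma s_nonneg_somewhere_of_vacuum :
  (forall t, r t = 1) -> exists t, t <= 0 /\ 0 <= s t.
Proof.
  intros Hvac. apply NNPP. intros Hnonneg.
  assert (Hneg : forall t, t <= 0 -> s t < 0).
  { intros t Ht. apply Rnot_le_lt. intros Hle. apply Hnonneg. now exists t. }
  assert (HG : forall t, t <= 0 -> 0 <= Gsr Q (s t) (r t)).
  { intros t _. rewrite Hvac. pose proof (Hs t). unfold Gsr. nra. }
  destruct (is_lim_minf_nonincreasing s 0 0 (s_nonincreasing_of_Gsr_nonneg 0 HG))
    as [l [Hl [Hl_ge Hl_le]]]; [intros t Ht; specialize (Hneg t Ht); lra|].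
  destruct (lim_minf_stationary l 1 Hl (is_lim_minf_const_fun r 1 Hvac)) as [Hstat _].
  assert (s 0 <= l) by (apply Hl_ge; lra). pose proof (Hs 0).
  assert (0 < Fsr Q l 1); [|lra].
  unfold Fsr, Gsr. apply Rmult_lt_0_compat; nra.
Qed.

Section NonVacuum.

Hypothesis Hr1 : forall t, r t < 1.

Lemma lyap_deriv t :
  derivable_pt_lim (fun t => lyap Q (s t) (r t)) t (4 * (2 * s t + Q) ^ 2 / (2 + Q * s t)).
Proof.
  pose proof (Hs t). pose proof (Hr t). pose proof (Hr1 t).
  unfold lyap, lyap_s, lyap_r.
  derive; [.. | unfold Fsr, Gsr; field; repeat split; nra]; simpl; nra.
Qed.

Lemma lyap_nondecreasing a b : a <= b -> lyap Q (s a) (r a) <= lyap Q (s b) (r b).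
Proof.
  intros Hab.
  apply (nondecreasing_of_deriv_nonneg _ _ lyap_deriv b); [|lra].
  intros t _. pose proof (Hs t).
  apply Rmult_le_pos; [apply Rmult_le_pos; [lra | apply pow2_ge_0]|].
  apply Rlt_le, Rinv_0_lt_compat. nra.
Qed.

(** [lyap] increases along the flow and is maximal at [P1], so the only orbit
    emanating from [P1] is the equilibrium itself. *)
Lemma starts_at_P1_of_lim :
  is_lim s m_infty (- Q / 2) -> is_lim r m_infty (rP1 Q) -> starts_at_P1.
Proof.
  intros Hs_lim Hr_lim. pose proof (rP1_bounds Q HQ).
  assert (HL : is_lim (fun t => lyap Q (s t) (r t)) m_infty (lyap Q (- Q / 2) (rP1 Q))).
  { unfold lyap, lyap_s, lyap_r. lim_tac; [nra | nra | lra | lra | reflexivity]. }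
  assert (Hle : Rbar_le (lyap Q (- Q / 2) (rP1 Q)) (lyap Q (s 0) (r 0))).
  { apply (is_lim_le_loc (fun t => lyap Q (s t) (r t)) (fun _ => lyap Q (s 0) (r 0)) m_infty);
      [| exact HL | apply is_lim_const].
    exists 0. intros t Ht. apply lyap_nondecreasing. lra. }
  simpl in Hle. pose proof (Hr 0). pose proof (Hr1 0).
  destruct (lyap_le_P1 Q (s 0) (r 0) HQ (Hs 0) ltac:(lra)) as [Hmax Heq].
  apply Heq. lra.
Qed.

(** LaSalle: a bounded increasing Lyapunov function forces [u := 2 s + Q] and then
    [s'] to vanish at minus infinity, which pins the alpha-limit to [P1]. *)
Lemma lim_P1_of_lyap_bounded_below m :
  (forall t, t <= 0 -> m <= lyap Q (s t) (r t)) ->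
  is_lim s m_infty (- Q / 2) /\ is_lim r m_infty (rP1 Q).
Proof.
  intros Hm.
  destruct (is_lim_minf_nondecreasing (fun t => lyap Q (s t) (r t)) 0 m) as [l [Hl _]];
    [intros a b Hab; apply lyap_nondecreasing; lra | exact Hm |].
  assert (Hbnd : forall t, 0 <= r t <= 1) by (intros t; pose proof (Hr t); lra).
  assert (Hu : is_lim (fun t => 2 * s t + Q) m_infty 0).
  { apply (is_lim_minf_zero_of_sq_le_deriv _ _ _ (fun t => - (2 * Fsr Q (s t) (r t)))
             l 12 0 lyap_deriv u_deriv); [| | exact Hl].
    - intros t _. rewrite Rabs_Ropp, Rabs_mult, Rabs_right by lra.
      pose proof (Fsr_abs_le Q (s t) (r t) HQ (Hs t) (Hbnd t)). lra.
    - intros t _. pose proof (Hs t).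
      assert (Hd : 4 * (2 * s t + Q) ^ 2 / (2 + Q * s t) - (2 * s t + Q) ^ 2
                   = (2 * s t + Q) ^ 2 * ((2 - Q * s t) / (2 + Q * s t))) by (field; nra).
      assert (0 <= (2 * s t + Q) ^ 2 * ((2 - Q * s t) / (2 + Q * s t))); [|lra].
      apply Rmult_le_pos; [apply pow2_ge_0 | apply Rlt_le, Rdiv_lt_0_compat; nra]. }
  assert (Hs_lim : is_lim s m_infty (- Q / 2)).
  { apply (is_lim_ext (fun t => ((2 * s t + Q) - Q) / 2)); [intros; field|].
    lim_tac; [lra | field]. }
  assert (HF : is_lim (fun t => - Fsr Q (s t) (r t)) m_infty 0).
  { apply (is_lim_minf_deriv_zero s _ (fun t => - Fsr_dot Q (s t) (r t)) (- Q / 2) 104 0 Ds);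
      [| | exact Hs_lim].
    - intros t. unfold Fsr, Gsr. derive. unfold Fsr_dot, Fsr, Gsr. ring.
    - intros t _. rewrite Rabs_Ropp. exact (Fsr_dot_abs_le Q (s t) (r t) HQ (Hs t) (Hbnd t)). }
  assert (HG : is_lim (fun t => Gsr Q (s t) (r t)) m_infty 0).
  { apply (is_lim_ext (fun t => - (- Fsr Q (s t) (r t)) / (1 - s t ^ 2))).
    - intros t. pose proof (Hs t). unfold Fsr. field. nra.
    - lim_tac; [nra | field; nra]. }
  split; [exact Hs_lim|].
  apply (is_lim_ext (fun t => (Gsr Q (s t) (r t) - (2 - Q) * s t) / (2 + Q * s t))).
  - intros t. pose proof (Hs t). unfold Gsr. field. nra.
  - lim_tac; [nra | unfold rP1; field; split; nra].
Qed.

Lemma Gsr_neg_persists T t1 : (forall t, t <= T -> 0 < 2 * s t + Q) -> t1 <= T ->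
  Gsr Q (s t1) (r t1) < 0 -> forall t, t <= t1 -> Gsr Q (s t) (r t) < 0.
Proof.
  intros Hu Ht1 HG1. apply (neg_before_of_upcrossings _ _ t1 Gsr_deriv); [|exact HG1].
  intros t Ht HG. unfold Fsr. rewrite HG.
  specialize (Hu t ltac:(lra)). pose proof (Hs t). pose proof (Hr t). pose proof (Hr1 t).
  assert (0 < 2 * r t * (1 - r t) * (2 * s t + Q))
    by (apply Rmult_lt_0_compat; [apply Rmult_lt_0_compat|]; lra).
  assert (0 < 2 + Q * s t) by nra. nra.
Qed.

Lemma Gsr_pos_persists T t1 : (forall t, t <= T -> 2 * s t + Q < 0) -> t1 <= T ->
  0 < Gsr Q (s t1) (r t1) -> forall t, t <= t1 -> 0 < Gsr Q (s t) (r t).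
Proof.
  intros Hu Ht1 HG1 t Ht. assert (- Gsr Q (s t) (r t) < 0); [|lra].
  eapply (neg_before_of_upcrossings (fun t => - Gsr Q (s t) (r t)) _ t1); [| |lra|exact Ht].
  - intros y. apply derivable_pt_lim_opp, Gsr_deriv.
  - intros y Hy HG. assert (HG0 : Gsr Q (s y) (r y) = 0) by lra.
    unfold Fsr. rewrite HG0.
    specialize (Hu y ltac:(lra)). pose proof (Hs y). pose proof (Hr y). pose proof (Hr1 y).
    assert (0 < 2 * r y * (1 - r y) * - (2 * s y + Q))
      by (apply Rmult_lt_0_compat; [apply Rmult_lt_0_compat|]; lra).
    assert (0 < 2 + Q * s y) by nra. nra.
Qed.

Section Repelling.

Hypothesis nP : ~ starts_at_P1.

Lemma Gsr_ne0_at_sP1 t : t <= 0 -> s t = - Q / 2 -> Gsr Q (s t) (r t) <> 0.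
Proof.
  intros Ht Hst HG. apply nP.
  rewrite Hst in HG. apply (Gsr_at_sP1_eq0 Q _ HQ) in HG.
  pose proof (Hr 0). pose proof (Hr1 0).
  destruct (lyap_le_P1 Q (s 0) (r 0) HQ (Hs 0) ltac:(lra)) as [Hmax Heq].
  apply Heq, Rle_antisym; [exact Hmax|].
  rewrite <- Hst, <- HG. now apply lyap_nondecreasing.
Qed.

Lemma no_stationary_alpha_limit (ls lr : R) :
  is_lim s m_infty ls -> is_lim r m_infty lr -> -1 < ls < 0 -> 0 <= lr <= 1 -> False.
Proof.
  intros Hls Hlr Hls_b Hlr_b.
  destruct (lim_minf_stationary ls lr Hls Hlr) as [HF Hu].
  assert (HG : Gsr Q ls lr = 0).
  { unfold Fsr in HF. apply Rmult_integral in HF. destruct HF as [HF|HF]; [nra | exact HF]. }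
  destruct (Req_dec lr 0) as [H0|H0]; [rewrite H0 in HG; unfold Gsr in HG; nra|].
  destruct (Req_dec lr 1) as [H1|H1]; [rewrite H1 in HG; unfold Gsr in HG; nra|].
  assert (Hsls : ls = - Q / 2).
  { apply Rmult_integral in Hu. destruct Hu as [Hu|Hu]; [|lra].
    apply Rmult_integral in Hu. destruct Hu; exfalso; [apply H0 | apply H1]; lra. }
  subst ls. apply (Gsr_at_sP1_eq0 Q _ HQ) in HG. subst lr.
  apply nP. now apply starts_at_P1_of_lim.
Qed.

Lemma u_crosses_at_zero t : t <= 0 -> 2 * s t + Q = 0 ->
  exists t1 t2, t - 1 < t1 < t /\ t < t2 < t + 1 /\
    ((2 * s t1 + Q < 0 /\ 0 < 2 * s t2 + Q) \/ (0 < 2 * s t1 + Q /\ 2 * s t2 + Q < 0)).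
Proof.
  intros Ht Hu.
  assert (HF : Fsr Q (s t) (r t) <> 0).
  { unfold Fsr. apply Rmult_integral_contrapositive. split.
    - pose proof (Hs t). nra.
    - apply Gsr_ne0_at_sP1; lra. }
  destruct (Rlt_or_le 0 (Fsr Q (s t) (r t))) as [Hpos|[Hneg|Hzero]]; [| |contradiction].
  - destruct (derivable_pt_lim_neg_decreasing_near _ t _ (u_deriv t)) as [d [Hd Hdecr]]; [lra|].
    set (h := Rmin (d / 2) (1 / 2)).
    assert (Hh : 0 < h < d /\ h < 1) by (unfold h; apply Rmin_case_strong; lra).
    destruct (Hdecr h ltac:(lra)). exists (t - h), (t + h). repeat split; lra.
  - destruct (derivable_pt_lim_pos_increasing_near _ t _ (u_deriv t)) as [d [Hd Hincr]]; [lra|].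
    set (h := Rmin (d / 2) (1 / 2)).
    assert (Hh : 0 < h < d /\ h < 1) by (unfold h; apply Rmin_case_strong; lra).
    destruct (Hincr h ltac:(lra)). exists (t - h), (t + h). repeat split; lra.
Qed.

Lemma u_neg_values_of_nonpos_values :
  (forall T, T <= 0 -> exists t, t <= T /\ 2 * s t + Q <= 0) ->
  forall T, T <= 0 -> exists t, t <= T /\ 2 * s t + Q < 0.
Proof.
  intros Hnonpos T HT. destruct (Hnonpos (T - 1) ltac:(lra)) as [t [Ht [Hlt|Heq]]].
  - exists t. split; lra.
  - destruct (u_crosses_at_zero t ltac:(lra) Heq) as [t1 [t2 [Ht1 [Ht2 [[H1 H2]|[H1 H2]]]]]].
    + exists t1. split; lra.
    + exists t2. split; lra.
Qed.

Lemma u_pos_values_of_nonneg_values :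
  (forall T, T <= 0 -> exists t, t <= T /\ 0 <= 2 * s t + Q) ->
  forall T, T <= 0 -> exists t, t <= T /\ 0 < 2 * s t + Q.
Proof.
  intros Hnonneg T HT. destruct (Hnonneg (T - 1) ltac:(lra)) as [t [Ht [Hlt|Heq]]].
  - exists t. split; lra.
  - destruct (u_crosses_at_zero t ltac:(lra) (eq_sym Heq))
      as [t1 [t2 [Ht1 [Ht2 [[H1 H2]|[H1 H2]]]]]].
    + exists t2. split; lra.
    + exists t1. split; lra.
Qed.

Hypothesis Hneg : forall t, t <= 0 -> s t < 0.

Lemma lim_F_of_u_pos T : T <= 0 -> (forall t, t <= T -> 0 < 2 * s t + Q) ->
  is_lim s m_infty 0 /\ is_lim r m_infty 0.
Proof.
  intros HT Hu.
  assert (Hr_mono : forall a b, a <= b <= T -> r a <= r b)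
    by (apply r_nondecreasing_of_u_nonneg; intros t Ht; specialize (Hu t Ht); lra).
  destruct (classic (exists t1, t1 <= T /\ Gsr Q (s t1) (r t1) < 0)) as [[t1 [Ht1 HG1]]|HnG].
  - exfalso.
    assert (HGneg : forall t, t <= t1 -> Gsr Q (s t) (r t) <= 0)
      by (intros t Ht; apply Rlt_le, (Gsr_neg_persists T t1); assumption).
    destruct (is_lim_minf_nondecreasing s t1 (- Q / 2) (s_nondecreasing_of_Gsr_nonpos t1 HGneg))
      as [ls [Hls [Hls_le Hls_ge]]]; [intros t Ht; specialize (Hu t ltac:(lra)); lra|].
    destruct (is_lim_minf_nondecreasing r t1 0) as [lr [Hlr [Hlr_le Hlr_ge]]];
      [intros a b Hab; apply Hr_mono; lra | intros t _; pose proof (Hr t); lra|].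
    apply (no_stationary_alpha_limit ls lr Hls Hlr).
    + specialize (Hls_le t1 ltac:(lra)). specialize (Hneg t1 ltac:(lra)). lra.
    + specialize (Hlr_le t1 ltac:(lra)). pose proof (Hr t1). lra.
  - assert (HGnn : forall t, t <= T -> 0 <= Gsr Q (s t) (r t)).
    { intros t Ht. apply Rnot_lt_le. intros HG. apply HnG. now exists t. }
    destruct (is_lim_minf_nonincreasing s T 0 (s_nonincreasing_of_Gsr_nonneg T HGnn))
      as [ls [Hls [Hls_ge Hls_le]]]; [intros t Ht; specialize (Hneg t ltac:(lra)); lra|].
    destruct (is_lim_minf_nondecreasing r T 0 Hr_mono) as [lr [Hlr [Hlr_le Hlr_ge]]];
      [intros t _; pose proof (Hr t); lra|].
    destruct (lim_minf_stationary ls lr Hls Hlr) as [HF Hstat].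
    specialize (Hls_ge T ltac:(lra)). specialize (Hlr_le T ltac:(lra)).
    specialize (Hu T ltac:(lra)). pose proof (Hs T). pose proof (Hr1 T).
    assert (Hlr0 : lr = 0).
    { apply Rmult_integral in Hstat. destruct Hstat as [Hstat|Hstat]; [|lra].
      apply Rmult_integral in Hstat. destruct Hstat; lra. }
    subst lr. unfold Fsr, Gsr in HF.
    assert (Hls0 : ls = 0) by (apply Rmult_integral in HF; destruct HF; nra).
    subst ls. now split.
Qed.

(** Below [Gsr <= 0] one has [(1 + s) r <= 1 - r], while the drift of this ratio
    tends to [2 (Q - 2) < 0] at the corner [(s, r) = (-1, 1)]. *)
Lemma no_alpha_limit_at_vacuum_corner T : T <= 0 ->
  (forall t, t <= T -> Gsr Q (s t) (r t) <= 0) ->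
  is_lim s m_infty (-1) -> is_lim r m_infty 1 -> False.
Proof.
  intros HT HG Hls Hlr.
  apply (not_bounded_above_of_deriv_lim_neg
           (fun t => ln (1 + s t) + ln (r t) - ln (1 - r t))
           (fun t => - ((1 - s t) * Gsr Q (s t) (r t)) + 2 * (2 * s t + Q))
           (- ((1 - -1) * Gsr Q (-1) 1) + 2 * (2 * -1 + Q)) 0 T).
  - intros t. pose proof (Hs t). pose proof (Hr t). pose proof (Hr1 t).
    derive; [lra | lra | lra | unfold Fsr, Gsr; field; lra].
  - unfold Gsr. lim_tac. reflexivity.
  - unfold Gsr. lra.
  - intros t Ht. pose proof (Hs t). pose proof (Hr t). pose proof (Hr1 t).
    specialize (HG t Ht). pose proof (Hneg t ltac:(lra)).
    assert (Hbelow : (1 + s t) * r t <= 1 - r t).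
    { unfold Gsr in HG. assert (0 <= (2 - Q) * (1 - r t)) by nra. nra. }
    rewrite <- ln_mult by lra.
    assert (ln ((1 + s t) * r t) <= ln (1 - r t)) by (apply ln_le; nra). lra.
Qed.

Lemma u_neg_eventually_absurd T : T <= 0 -> ~ (forall t, t <= T -> 2 * s t + Q < 0).
Proof.
  intros HT Hu.
  assert (Hr_mono : forall a b, a <= b <= T -> r b <= r a)
    by (apply r_nonincreasing_of_u_nonpos; intros t Ht; specialize (Hu t Ht); lra).
  destruct (classic (exists t1, t1 <= T /\ 0 < Gsr Q (s t1) (r t1))) as [[t1 [Ht1 HG1]]|HnG].
  - assert (HGpos : forall t, t <= t1 -> 0 <= Gsr Q (s t) (r t))
      by (intros t Ht; apply Rlt_le, (Gsr_pos_persists T t1); assumption).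
    destruct (is_lim_minf_nonincreasing s t1 (- Q / 2) (s_nonincreasing_of_Gsr_nonneg t1 HGpos))
      as [ls [Hls [Hls_ge Hls_le]]]; [intros t Ht; specialize (Hu t ltac:(lra)); lra|].
    destruct (is_lim_minf_nonincreasing r t1 1) as [lr [Hlr [Hlr_ge Hlr_le]]];
      [intros a b Hab; apply Hr_mono; lra | intros t _; pose proof (Hr t); lra|].
    apply (no_stationary_alpha_limit ls lr Hls Hlr).
    + specialize (Hls_ge t1 ltac:(lra)). pose proof (Hs t1). lra.
    + specialize (Hlr_ge t1 ltac:(lra)). pose proof (Hr t1). lra.
  - assert (HGnp : forall t, t <= T -> Gsr Q (s t) (r t) <= 0).
    { intros t Ht. apply Rnot_lt_le. intros HG. apply HnG. now exists t. }
    destruct (is_lim_minf_nondecreasing s T (-1) (s_nondecreasing_of_Gsr_nonpos T HGnp))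
      as [ls [Hls [Hls_le Hls_ge]]]; [intros t _; pose proof (Hs t); lra|].
    destruct (is_lim_minf_nonincreasing r T 1 Hr_mono) as [lr [Hlr [Hlr_ge Hlr_le]]];
      [intros t _; pose proof (Hr t); lra|].
    destruct (lim_minf_stationary ls lr Hls Hlr) as [HF Hstat].
    specialize (Hls_le T ltac:(lra)). specialize (Hlr_ge T ltac:(lra)).
    specialize (Hu T ltac:(lra)). pose proof (Hr T). pose proof (Hneg T HT).
    assert (Hlr1 : lr = 1).
    { apply Rmult_integral in Hstat. destruct Hstat as [Hstat|Hstat]; [|lra].
      apply Rmult_integral in Hstat. destruct Hstat; lra. }
    subst lr. unfold Fsr, Gsr in HF.
    assert (Hls1 : ls = -1).
    { replace ((2 - Q) * (1 - 1) * ls) with 0 in HF by ring.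
      apply Rmult_integral in HF. destruct HF; nra. }
    subst ls. exact (no_alpha_limit_at_vacuum_corner T HT HGnp Hls Hlr).
Qed.

Lemma s_fast_near_vacuum t : t <= 0 -> 1 / 2 < r t -> s_lo Q < s t ->
  - Fsr Q (s t) (r t) <= - F_lo Q.
Proof.
  intros Ht Hrt Hst. pose proof (Hr1 t). pose proof (Hneg t Ht).
  pose proof (F_lo_le_Fsr Q (s t) (r t) HQ ltac:(lra) ltac:(lra)). lra.
Qed.

Lemma near_vacuum_open t : 1 / 2 < r t /\ s_lo Q < s t ->
  exists d, 0 < d /\ forall y, Rabs (y - t) < d -> 1 / 2 < r y /\ s_lo Q < s y.
Proof.
  intros [Hrt Hst].
  destruct (derivable_pt_lim_gt_near r t _ (1 / 2) (Dr t) Hrt) as [d1 [Hd1 Hnear1]].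
  destruct (derivable_pt_lim_gt_near s t _ (s_lo Q) (Ds t) Hst) as [d2 [Hd2 Hnear2]].
  exists (Rmin d1 d2). split; [now apply Rmin_case|].
  intros y Hy. split.
  - apply Hnear1. eapply Rlt_le_trans; [exact Hy | apply Rmin_l].
  - apply Hnear2. eapply Rlt_le_trans; [exact Hy | apply Rmin_r].
Qed.

Definition vacuum_potential t : R := ln (1 - r t) - 2 * Q / F_lo Q * s t.

Lemma vacuum_potential_deriv t : derivable_pt_lim vacuum_potential t
  (- 2 * r t * (2 * s t + Q) + 2 * Q / F_lo Q * Fsr Q (s t) (r t)).
Proof.
  pose proof (Hr1 t). pose proof (F_lo_pos Q HQ).
  unfold vacuum_potential. derive; [lra | field; lra].
Qed.

(** Going backwards from a crossing of [s = - Q / 2] very close to [r = 1], the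
    [vacuum_potential] decreases, which keeps [r] close to [1] while [s] increases
    at the rate [F_lo Q]. *)
Lemma near_vacuum_trap c : c <= 0 -> s c = - Q / 2 ->
  1 - r c <= exp (- (Q ^ 2 / F_lo Q)) / 4 ->
  forall t, c - Q / F_lo Q <= t <= c -> 1 / 2 < r t /\ s_lo Q < s t.
Proof.
  intros Hc Hsc Hrc.
  pose proof (s_lo_bounds Q HQ) as Hslo. pose proof (F_lo_pos Q HQ) as Ha.
  set (P := fun t => 1 / 2 < r t /\ s_lo Q < s t).
  assert (exp (- (Q ^ 2 / F_lo Q)) <= exp 0).
  { apply Rlt_le, exp_increasing. assert (0 < Q ^ 2 / F_lo Q) by (apply Rdiv_lt_0_compat; nra). lra. }
  rewrite exp_0 in *.
  assert (HPc : P c) by (split; lra).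
  intros t0 Ht0. apply NNPP. intros nP0.
  assert (Ht0c : t0 < c) by (destruct Ht0 as [_ [Hlt|Heq]]; [exact Hlt | subst; contradiction]).
  destruct (open_pred_last_failure P t0 c Ht0c HPc nP0 near_vacuum_open) as [b [[Hb0 Hbc] [nPb Hafter]]].
  apply nPb.
  assert (Hsb : s c - s b <= - F_lo Q * (c - b)).
  { apply (mvt_upper_bound s _ Ds); [lra|]. intros y Hy.
    apply s_fast_near_vacuum; [lra | apply Hafter; lra..]. }
  assert (HPhib : 0 * (c - b) <= vacuum_potential c - vacuum_potential b).
  { apply (mvt_lower_bound _ _ vacuum_potential_deriv); [lra|]. intros y Hy.
    destruct (Hafter y ltac:(lra)) as [Hry Hsy]. pose proof (Hr1 y). pose proof (Hneg y ltac:(lra)).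
    pose proof (Fsr_dominates_r_drift Q (s y) (r y) HQ ltac:(lra) ltac:(lra)).
    lra. }
  assert (Hsb_neg : s b < 0) by (apply Hneg; lra).
  split; [|assert (0 <= F_lo Q * (c - b)) by (apply Rmult_le_pos; lra); lra].
  unfold vacuum_potential in HPhib. pose proof (Hr1 b). pose proof (Hr1 c).
  assert (Hln_c : ln (1 - r c) <= ln (exp (- (Q ^ 2 / F_lo Q)) / 4)) by (apply ln_le; lra).
  assert (Hln_eta : ln (exp (- (Q ^ 2 / F_lo Q)) / 4) = - (Q ^ 2 / F_lo Q) + ln (/ 4)).
  { unfold Rdiv at 1. rewrite ln_mult, ln_exp; [reflexivity | apply exp_pos | lra]. }
  assert (2 * Q / F_lo Q * (s b - s c) < Q ^ 2 / F_lo Q).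
  { replace (Q ^ 2 / F_lo Q) with (2 * Q / F_lo Q * (Q / 2)) by (field; lra).
    apply Rmult_lt_compat_l; [apply Rdiv_lt_0_compat|]; lra. }
  assert (Hln_b : ln (1 - r b) < ln (/ 4)) by lra.
  apply ln_lt_inv in Hln_b; lra.
Qed.

Lemma r_away_from_1_at_sP1 :
  exists eta, 0 < eta /\ forall c, c <= 0 -> s c = - Q / 2 -> eta < 1 - r c.
Proof.
  pose proof (F_lo_pos Q HQ) as Ha.
  exists (exp (- (Q ^ 2 / F_lo Q)) / 4). split; [apply Rdiv_lt_0_compat; [apply exp_pos | lra]|].
  intros c Hc Hsc. apply Rnot_le_lt. intros Hrc.
  pose proof (near_vacuum_trap c Hc Hsc Hrc) as Htrap.
  assert (HQa : 0 < Q / F_lo Q) by (apply Rdiv_lt_0_compat; lra).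
  assert (Hdrop : s c - s (c - Q / F_lo Q) <= - F_lo Q * (c - (c - Q / F_lo Q))).
  { apply (mvt_upper_bound s _ Ds); [lra|]. intros y Hy.
    destruct (Htrap y ltac:(lra)). apply s_fast_near_vacuum; lra. }
  assert (F_lo Q * (c - (c - Q / F_lo Q)) = Q) by (field; lra).
  assert (s (c - Q / F_lo Q) < 0) by (apply Hneg; lra).
  lra.
Qed.

Lemma u_oscillation_absurd :
  (forall m, exists t, t <= 0 /\ lyap Q (s t) (r t) < m) ->
  (forall T, T <= 0 -> exists t, t <= T /\ 2 * s t + Q < 0) ->
  (forall T, T <= 0 -> exists t, t <= T /\ 0 < 2 * s t + Q) -> False.
Proof.
  intros Hunb Hu_neg Hu_pos.
  destruct r_away_from_1_at_sP1 as [eta [Heta Haway]].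
  destruct (Hunb ((2 + Q) * lyap_s Q (- Q / 2) + 2 * ln eta + Q * ln (rP1 Q)))
    as [tm [Htm Hlow]].
  destruct (Hu_neg tm Htm) as [tb [Htb Hub]].
  destruct (Hu_pos (tb - 1) ltac:(lra)) as [ta [Hta Hua]].
  (* at the last crossing of [s = - Q / 2] before [tb], [s] decreases: [Gsr >= 0] there *)
  destruct (last_zero_before_neg _ _ ta tb u_deriv ltac:(lra) ltac:(lra) Hub)
    as [c [Hc [Huc [Hdu _]]]].
  assert (Hsc : s c = - Q / 2) by lra.
  assert (HGc : 0 <= Gsr Q (s c) (r c)).
  { unfold Fsr in Hdu. pose proof (Hs c).
    apply Rnot_lt_le. intros HG. assert (0 < (1 - s c ^ 2) * - Gsr Q (s c) (r c)); [|nra].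
    apply Rmult_lt_0_compat; nra. }
  rewrite Hsc in HGc. apply (Gsr_at_sP1_nonneg Q _ HQ) in HGc.
  assert (Hmono : lyap Q (s c) (r c) <= lyap Q (s tm) (r tm)) by (apply lyap_nondecreasing; lra).
  specialize (Haway c ltac:(lra) Hsc).
  pose proof (rP1_bounds Q HQ). pose proof (Hr1 c).
  assert (ln eta < ln (1 - r c)) by (apply ln_increasing; lra).
  assert (ln (rP1 Q) <= ln (r c)) by (apply ln_le; lra).
  assert (Q * ln (rP1 Q) <= Q * ln (r c)) by (apply Rmult_le_compat_l; lra).
  unfold lyap, lyap_r in Hmono, Hlow. rewrite Hsc in Hmono. lra.
Qed.

Lemma lim_F_of_not_P1 : is_lim s m_infty 0 /\ is_lim r m_infty 0.
Proof.
  destruct (classic (exists m, forall t, t <= 0 -> m <= lyap Q (s t) (r t))) as [[m Hm]|Hunb].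
  { exfalso. apply nP, starts_at_P1_of_lim; apply (lim_P1_of_lyap_bounded_below m Hm). }
  destruct (classic (exists T, T <= 0 /\ forall t, t <= T -> 0 < 2 * s t + Q))
    as [[T [HT Hpos]]|Hnpos]; [now apply (lim_F_of_u_pos T)|].
  destruct (classic (exists T, T <= 0 /\ forall t, t <= T -> 2 * s t + Q < 0))
    as [[T [HT Hneg_u]]|Hnneg]; [exfalso; now apply (u_neg_eventually_absurd T)|].
  exfalso. apply u_oscillation_absurd.
  - intros m. apply NNPP. intros Hn. apply Hunb. exists m. intros t Ht.
    apply Rnot_lt_le. intros Hlt. apply Hn. now exists t.
  - apply u_neg_values_of_nonpos_values. intros T HT. apply NNPP. intros Hn.
    apply Hnpos. exists T. split; [exact HT|]. intros t Ht.
    apply Rnot_le_lt. intros Hle. apply Hn. now exists t.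
  - apply u_pos_values_of_nonneg_values. intros T HT. apply NNPP. intros Hn.
    apply Hnneg. exists T. split; [exact HT|]. intros t Ht.
    apply Rnot_le_lt. intros Hle. apply Hn. now exists t.
Qed.

End Repelling.

End NonVacuum.

Theorem planar_alpha_limit :
  (forall t, r t = 1) \/ (forall t, r t < 1) ->
  is_lim s m_infty 1 \/ (is_lim s m_infty 0 /\ is_lim r m_infty 0) \/ starts_at_P1.
Proof.
  intros Hvac.
  destruct (classic (exists t, t <= 0 /\ 0 <= s t)) as [Hnonneg|Hnonneg];
    [left; now apply lim_minf_s_1_of_nonneg|].
  assert (Hneg : forall t, t <= 0 -> s t < 0).
  { intros t Ht. apply Rnot_le_lt. intros Hle. apply Hnonneg. now exists t. }
  destruct Hvac as [Hvac|Hr1]; [exfalso; now apply Hnonneg, s_nonneg_somewhere_of_vacuum|].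
  destruct (classic starts_at_P1) as [HP|nP]; [now right; right|].
  right; left. exact (lim_F_of_not_P1 Hr1 nP Hneg).
Qed.

End Planar.

(** * Reduction of the shear invariant set to the planar system *)

Definition shear_r (x : State) : R := Nm x ^ 2 / (1 - Sp x ^ 2).

Section ShearSolution.

Variables (g : R) (sol : R -> State).
Hypothesis hsol : is_solution g sol.
Hypothesis hS0 : inS (sol 0).

Lemma Sp_deriv t : derivable_pt_lim (fun t => Sp (sol t)) t
  (- (2 - qfun g (sol t)) * Sp (sol t) - 2 * Nm (sol t) ^ 2).
Proof. exact (proj1 (hsol t)). Qed.

Lemma Sm_deriv t : derivable_pt_lim (fun t => Sm (sol t)) t
  (- (2 - qfun g (sol t)) * Sm (sol t) - 2 * sqrt 3 * Np (sol t) * Nm (sol t)).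
Proof. exact (proj1 (proj2 (hsol t))). Qed.

Lemma Np_deriv t : derivable_pt_lim (fun t => Np (sol t)) t
  ((qfun g (sol t) + 2 * Sp (sol t)) * Np (sol t) + 2 * sqrt 3 * Sm (sol t) * Nm (sol t)).
Proof. exact (proj1 (proj2 (proj2 (hsol t)))). Qed.

Lemma Nm_deriv t : derivable_pt_lim (fun t => Nm (sol t)) t
  ((qfun g (sol t) + 2 * Sp (sol t)) * Nm (sol t) + 2 * sqrt 3 * Sm (sol t) * Np (sol t)).
Proof. exact (proj1 (proj2 (proj2 (proj2 (hsol t))))). Qed.

Lemma Om_deriv t : derivable_pt_lim (fun t => Om (sol t)) t
  (2 * (qfun g (sol t) - qstar g) * Om (sol t)).
Proof. exact (proj2 (proj2 (proj2 (proj2 (hsol t))))). Qed.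

Local Ltac pose_derivs :=
  pose proof Sp_deriv; pose proof Sm_deriv; pose proof Np_deriv;
  pose proof Nm_deriv; pose proof Om_deriv.

Local Ltac continuity_by_derive :=
  pose_derivs; eapply continuity_pt_of_derivable_pt_lim; unfold qfun; repeat derive_step.

Lemma constraint_invariant t :
  Om (sol t) + Sp (sol t) ^ 2 + Sm (sol t) ^ 2 + Nm (sol t) ^ 2 = 1.
Proof.
  assert (Hzero : forall t,
            Om (sol t) + Sp (sol t) ^ 2 + Sm (sol t) ^ 2 + Nm (sol t) ^ 2 - 1 = 0).
  { destruct hS0 as [[Hc _] _].
    apply (linear_growth_vanish _
             (fun t => 2 * qfun g (sol t)
                       * (Om (sol t) + Sp (sol t) ^ 2 + Sm (sol t) ^ 2 + Nm (sol t) ^ 2 - 1))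
             (fun t => 1 + (2 * qfun g (sol t)) ^ 2) 0); [| | |lra].
    - intros y. pose_derivs. derive. unfold qfun. ring.
    - intros y. continuity_by_derive.
    - intros y. rewrite Rabs_mult.
      apply Rmult_le_compat_r; [apply Rabs_pos | apply Rabs_le_1_plus_sq]. }
  specialize (Hzero t). lra.
Qed.

Lemma shear_invariant t : Sm (sol t) = 0 /\ Np (sol t) = 0.
Proof.
  assert (Hzero : forall t, Sm (sol t) ^ 2 + Np (sol t) ^ 2 = 0).
  { destruct hS0 as [_ [HSm HNp]].
    apply (linear_growth_vanish _
             (fun t => - 2 * (2 - qfun g (sol t)) * Sm (sol t) ^ 2
                       + 2 * (qfun g (sol t) + 2 * Sp (sol t)) * Np (sol t) ^ 2)
             (fun t => 2 * (1 + (2 - qfun g (sol t)) ^ 2)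
                       + 2 * (1 + (qfun g (sol t) + 2 * Sp (sol t)) ^ 2)) 0);
      [| | | rewrite HSm, HNp; ring].
    - intros y. pose_derivs. derive. ring.
    - intros y. continuity_by_derive.
    - intros y.
      set (a := 2 - qfun g (sol y)). set (b := qfun g (sol y) + 2 * Sp (sol y)).
      set (X := Sm (sol y) ^ 2). set (Y := Np (sol y) ^ 2).
      assert (0 <= X) by (unfold X; nra). assert (0 <= Y) by (unfold Y; nra).
      rewrite (Rabs_right (X + Y)) by lra.
      assert (0 <= 1 + a ^ 2 - a) by nra. assert (0 <= 1 + a ^ 2 + a) by nra.
      assert (0 <= 1 + b ^ 2 - b) by nra. assert (0 <= 1 + b ^ 2 + b) by nra.
      apply Rabs_le. split; nra. }
  specialize (Hzero t). split; nra.
Qed.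

Lemma Nm_pos t : 0 < Nm (sol t).
Proof.
  destruct hS0 as [[_ [_ HN]] _].
  apply (linear_growth_pos _ _ (fun t => 1 + (qfun g (sol t) + 2 * Sp (sol t)) ^ 2) 0 Nm_deriv).
  - intros y. continuity_by_derive.
  - intros y. destruct (shear_invariant y) as [-> ->].
    replace ((qfun g (sol y) + 2 * Sp (sol y)) * Nm (sol y) + 2 * sqrt 3 * 0 * 0)
      with ((qfun g (sol y) + 2 * Sp (sol y)) * Nm (sol y)) by ring.
    rewrite Rabs_mult.
    apply Rmult_le_compat_r; [apply Rabs_pos | apply Rabs_le_1_plus_sq].
  - pose proof (Rabs_pos (Np (sol 0))). lra.
Qed.

Lemma Om_vacuum_dichotomy : (forall t, Om (sol t) = 0) \/ (forall t, 0 < Om (sol t)).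
Proof.
  assert (Hgrowth : forall t, Rabs (2 * (qfun g (sol t) - qstar g) * Om (sol t))
                    <= (1 + (2 * (qfun g (sol t) - qstar g)) ^ 2) * Rabs (Om (sol t))).
  { intros t. rewrite Rabs_mult.
    apply Rmult_le_compat_r; [apply Rabs_pos | apply Rabs_le_1_plus_sq]. }
  assert (Hcont : forall t,
            continuity_pt (fun t => 1 + (2 * (qfun g (sol t) - qstar g)) ^ 2) t)
    by (intros t; continuity_by_derive).
  destruct hS0 as [[_ [[Hpos|Hzero] _]] _].
  - right. exact (linear_growth_pos _ _ _ 0 Om_deriv Hcont Hgrowth Hpos).
  - left. exact (linear_growth_vanish _ _ _ 0 Om_deriv Hcont Hgrowth (eq_sym Hzero)).
Qed.

Lemma Om_nonneg t : 0 <= Om (sol t).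
Proof. destruct Om_vacuum_dichotomy as [H|H]; specialize (H t); lra. Qed.

Lemma Sp_sq_lt_1 t : 0 < 1 - Sp (sol t) ^ 2.
Proof.
  pose proof (constraint_invariant t). pose proof (Nm_pos t). pose proof (Om_nonneg t).
  pose proof (pow2_ge_0 (Sm (sol t))). nra.
Qed.

Lemma Om_shear t : Om (sol t) = (1 - Sp (sol t) ^ 2) * (1 - shear_r (sol t)).
Proof.
  pose proof (constraint_invariant t). pose proof (Sp_sq_lt_1 t).
  destruct (shear_invariant t) as [HSm _]. unfold shear_r.
  field_simplify; [|lra]. rewrite HSm in *. lra.
Qed.

Lemma shear_Sp_deriv t :
  derivable_pt_lim (fun t => Sp (sol t)) t
    (- Fsr (qstar g) (Sp (sol t)) (shear_r (sol t))).
Proof.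
  apply (derivable_pt_lim_eq_compat _ _ _ _ (Sp_deriv t)).
  pose proof (Sp_sq_lt_1 t). pose proof (Om_shear t) as HOm.
  destruct (shear_invariant t) as [HSm _].
  unfold qfun, Fsr, Gsr. rewrite HSm, HOm. unfold shear_r. field. lra.
Qed.

Lemma shear_r_deriv t :
  derivable_pt_lim (fun t => shear_r (sol t)) t
    (2 * shear_r (sol t) * (1 - shear_r (sol t)) * (2 * Sp (sol t) + qstar g)).
Proof.
  pose proof (Sp_sq_lt_1 t). pose proof (Om_shear t) as HOm.
  destruct (shear_invariant t) as [HSm HNp].
  pose proof Sp_deriv. pose proof Nm_deriv. unfold shear_r.
  derive; [lra|]. unfold qfun, Rsqr. rewrite HSm, HNp, HOm. unfold shear_r. field. lra.
Qed.

Lemma shear_r_bounds t : 0 < shear_r (sol t) <= 1.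
Proof.
  pose proof (Sp_sq_lt_1 t). pose proof (Nm_pos t). pose proof (Om_nonneg t).
  pose proof (Om_shear t). unfold shear_r in *. split; [apply Rdiv_lt_0_compat; nra | nra].
Qed.

Lemma shear_vacuum_dichotomy :
  (forall t, shear_r (sol t) = 1) \/ (forall t, shear_r (sol t) < 1).
Proof.
  destruct Om_vacuum_dichotomy as [HOm|HOm]; [left|right]; intros t;
    specialize (HOm t); pose proof (Om_shear t); pose proof (Sp_sq_lt_1 t);
    pose proof (shear_r_bounds t); nra.
Qed.

Lemma shear_alpha_limit : 0 < qstar g < 2 ->
  is_lim (fun t => Sp (sol t)) m_infty 1 \/
  (is_lim (fun t => Sp (sol t)) m_infty 0 /\ is_lim (fun t => shear_r (sol t)) m_infty 0) \/
  starts_at_P1 (qstar g) (fun t => Sp (sol t)) (fun t => shear_r (sol t)).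
Proof.
  intros HQ. apply planar_alpha_limit.
  - exact HQ.
  - exact shear_Sp_deriv.
  - exact shear_r_deriv.
  - intros t. pose proof (Sp_sq_lt_1 t). split; nra.
  - exact shear_r_bounds.
  - exact shear_vacuum_dichotomy.
Qed.

Lemma conv_minf_Q1 : is_lim (fun t => Sp (sol t)) m_infty 1 -> conv_minf sol Q1.
Proof.
  intros HSp.
  assert (Hgap : is_lim (fun t => 1 - Sp (sol t) ^ 2) m_infty 0) by (lim_tac; ring).
  assert (Hsqueeze : forall f : R -> R,
            (forall t, 0 <= f t <= 1 - Sp (sol t) ^ 2) -> is_lim f m_infty 0).
  { intros f Hf. apply (is_lim_le_le_loc (fun _ => 0) (fun t => 1 - Sp (sol t) ^ 2));
      [exists 0; intros t _; apply Hf | apply is_lim_const | exact Hgap]. }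
  unfold conv_minf, Q1; simpl. repeat split.
  - exact HSp.
  - apply is_lim_minf_const_fun. intros t. apply shear_invariant.
  - apply is_lim_minf_const_fun. intros t. apply shear_invariant.
  - apply is_lim_minf_nonneg_of_sq; [intros t; apply Rlt_le, Nm_pos|].
    apply Hsqueeze. intros t. pose proof (constraint_invariant t). pose proof (Om_nonneg t).
    pose proof (pow2_ge_0 (Nm (sol t))). pose proof (pow2_ge_0 (Sm (sol t))). lra.
  - apply Hsqueeze. intros t. pose proof (constraint_invariant t). pose proof (Om_nonneg t).
    pose proof (pow2_ge_0 (Nm (sol t))). pose proof (pow2_ge_0 (Sm (sol t))). lra.
Qed.

Lemma conv_minf_F :
  is_lim (fun t => Sp (sol t)) m_infty 0 -> is_lim (fun t => shear_r (sol t)) m_infty 0 ->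
  conv_minf sol Fpt.
Proof.
  intros HSp Hr.
  assert (HNm2 : is_lim (fun t => Nm (sol t) ^ 2) m_infty 0).
  { apply (is_lim_ext (fun t => shear_r (sol t) * (1 - Sp (sol t) ^ 2))).
    - intros t. pose proof (Sp_sq_lt_1 t). unfold shear_r. field. lra.
    - lim_tac. ring. }
  unfold conv_minf, Fpt; simpl. repeat split.
  - exact HSp.
  - apply is_lim_minf_const_fun. intros t. apply shear_invariant.
  - apply is_lim_minf_const_fun. intros t. apply shear_invariant.
  - apply is_lim_minf_nonneg_of_sq; [intros t; apply Rlt_le, Nm_pos | exact HNm2].
  - apply (is_lim_ext (fun t => 1 - Sp (sol t) ^ 2 - Nm (sol t) ^ 2)).
    + intros t. pose proof (constraint_invariant t). destruct (shear_invariant t) as [HSm _].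
      rewrite HSm in *. lra.
    + lim_tac. ring.
Qed.

Lemma P1plus_of_starts_at_P1 :
  starts_at_P1 (qstar g) (fun t => Sp (sol t)) (fun t => shear_r (sol t)) -> 0 < qstar g < 2 ->
  sol 0 = P1plus g.
Proof.
  intros [HSp Hr] HQ. set (Q := qstar g) in *.
  pose proof (constraint_invariant 0) as Hc. pose proof (Sp_sq_lt_1 0).
  pose proof (Nm_pos 0) as HN. destruct (shear_invariant 0) as [HSm HNp].
  assert (HN2 : Nm (sol 0) ^ 2 = Q * (2 - Q) / 4).
  { unfold shear_r, rP1 in Hr. rewrite HSp in *.
    apply (Rmult_eq_compat_r (1 - (- Q / 2) ^ 2)) in Hr.
    unfold Rdiv at 1 in Hr. rewrite Rmult_assoc, Rinv_l, Rmult_1_r in Hr by lra.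
    rewrite Hr. field. lra. }
  assert (HNm : Nm (sol 0) = sqrt (Q * (2 - Q)) / 2).
  { replace (Q * (2 - Q)) with ((2 * Nm (sol 0)) ^ 2) by nra.
    rewrite sqrt_pow2 by lra. field. }
  assert (HOm : Om (sol 0) = 1 - Q / 2) by (rewrite HSp, HSm in Hc; nra).
  unfold P1plus. fold Q. destruct (sol 0) as [a b c d e]. simpl in *.
  now rewrite HSp, HSm, HNp, HNm, HOm.
Qed.

End ShearSolution.

Theorem mainTheorem3 (g : R) (hg : 2 / 3 < g < 2)
  (x : State) (sol : R -> State)
  (hxS : inS x) (hxP : x <> P1plus g)
  (hsol : is_solution g sol) (h0 : sol 0 = x)
  (hF : ~ inFVI0 sol x) :
  conv_minf sol Q1.
Proof.
  subst x.
  assert (HQ : 0 < qstar g < 2) by (unfold qstar; lra).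
  destruct (shear_alpha_limit g sol hsol hxS HQ) as [HQ1|[[HSp Hr]|HP1]].
  - exact (conv_minf_Q1 g sol hsol hxS HQ1).
  - exfalso. apply hF. split; [apply hxS|]. exact (conv_minf_F g sol hsol hxS HSp Hr).
  - exfalso. apply hxP. exact (P1plus_of_starts_at_P1 g sol hsol hxS HP1 HQ).
Qed.
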